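(* Let $\gamma_a,\gamma_s>0$, $\sigma_B>0$, $q>0$, $\varepsilon_a\in(0,2)$, and let $\beta_s$ be the piecewise linear coalbedo described in the context. Consider the system \[ \gamma_a T_a'=\varepsilon_a\sigma_B|T_s|^3T_s-2\varepsilon_a\sigma_B|T_a|^3T_a,\qquad \gamma_s T_s'=-\sigma_B|T_s|^3T_s+\varepsilon_a\sigma_B|T_a|^3T_a+q\beta_s(T_s). \] Assume that the equation $\sigma_B(1-\frac{\varepsilon_a}{2})T^4=q\beta_s(T)$ has exactly three solutions $T^*_{s,1}\in(0,T_{s,-})$, $T^*_{s,2}\in(T_{s,-},T_{s,+})$, $T^*_{s,3}>T_{s,+}$, and that the equation $\sigma_B T^4=q\beta_s(T)$ has exactly one positive solution. Let $\mathcal Q=(0,+\infty)^2$, \[ \mathcal Q_4=\{(T_a,T_s)\in\mathcal Q:\ T_s<2^{1/4}T_a,\ -\sigma_B T_s^4+\varepsilon_a\sigma_B T_a^4+q\beta_s(T_s)>0\}, \] and $\mathcal C_{\mathrm{right}}=\partial\mathcal Q_4\cap\mathcal Q$. Then for every initial condition in $\mathcal C_{\mathrm{right}}$ which is not an equilibrium point, the solution followed backward in time reaches the horizontal axis: there exists $\tau>0$ such that $T_s(-\tau)=0$ and $T_a(-\tau)>0$.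
   Context: The coalbedo is $\beta_s(T)=\beta_{s,-}$ for $T\le T_{s,-}$, $\beta_s(T)=\beta_{s,-}+(\beta_{s,+}-\beta_{s,-})\frac{T-T_{s,-}}{T_{s,+}-T_{s,-}}$ for $T\in[T_{s,-},T_{s,+}]$, and $\beta_s(T)=\beta_{s,+}$ for $T\ge T_{s,+}$, where $T_{s,+}>T_{s,-}>0$ and $\beta_{s,+}>\beta_{s,-}>0$. The equilibrium points of the system in $[0,\infty)^2$ are then $(2^{-1/4}T^*_{s,i},T^*_{s,i})$, $i=1,2,3$. *)

From Stdlib Require Import Reals Lra.
Open Scope R_scope.

Definition coalbedo (Tm Tp bm bp T : R) : R :=
  if Rle_dec T Tm then bm
  else if Rle_dec Tp T then bp
  else bm + (bp - bm) * ((T - Tm) / (Tp - Tm)).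

(* Right-hand sides of the system (before dividing by gamma_a, gamma_s). *)
Definition Fa (eps sB Ta Ts : R) : R :=
  eps * sB * (Rabs Ts ^ 3 * Ts) - 2 * eps * sB * (Rabs Ta ^ 3 * Ta).

Definition Fs (eps sB q Tm Tp bm bp Ta Ts : R) : R :=
  - sB * (Rabs Ts ^ 3 * Ts) + eps * sB * (Rabs Ta ^ 3 * Ta)
  + q * coalbedo Tm Tp bm bp Ts.

Definition inQ (Ta Ts : R) : Prop := 0 < Ta /\ 0 < Ts.

Definition inQ4 (eps sB q Tm Tp bm bp Ta Ts : R) : Prop :=
  inQ Ta Ts /\ Ts < Rpower 2 (1/4) * Ta /\
  - sB * Ts ^ 4 + eps * sB * Ta ^ 4 + q * coalbedo Tm Tp bm bp Ts > 0.

(* Topological boundary in R^2 (product / max-metric topology, which is the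
   usual topology of R^2): every neighbourhood meets both S and its complement. *)
Definition in_boundary (S : R -> R -> Prop) (x y : R) : Prop :=
  forall e, 0 < e ->
    (exists u v, Rabs (u - x) < e /\ Rabs (v - y) < e /\ S u v) /\
    (exists u v, Rabs (u - x) < e /\ Rabs (v - y) < e /\ ~ S u v).

From Stdlib Require Import Reals Lra Lia Factorial Classical.
From Coquelicot Require Import Coquelicot.
Open Scope R_scope.

(* Reverse time: [u t = Ta (- t)] and [v t = Ts (- t)] solve [ga u' = - Fa], [gs v' = - Fs],
   and [Q4] is the region [Fa < 0 < Fs], where [u] increases and [v] decreases.  Along such
   a trajectory [2 u^4 - v^4] grows, so [Fa] stays negative, and [Fs] cannot return to [0].
   A boundary point that is not an equilibrium enters [Q4] at once and then stays in [Q4]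
   until [v] reaches [0].  The solution is obtained by Picard iteration for the vector field
   clamped outside a box [[0, umax] x [0, vmax]], with [umax] so large that the trajectory
   leaves the box only through [v = 0]. *)

(** * Real functions of one variable *)

Lemma diff_ge_of_derive_ge f f' a b c : a <= b ->
  (forall x, a <= x <= b -> derivable_pt_lim f x (f' x)) ->
  (forall x, a <= x <= b -> c <= f' x) -> c * (b - a) <= f b - f a.
Proof.
  intros Hab Hd Hc. destruct (Req_dec a b) as [-> | Hne]; [rewrite !Rminus_diag; lra |].
  destruct (MVT_cor2 f f' a b ltac:(lra) Hd) as [x [E Hx]].
  rewrite E. apply Rmult_le_compat_r; [lra | apply Hc; lra].
Qed.

Lemma diff_le_of_derive_le f f' a b c : a <= b ->
  (forall x, a <= x <= b -> derivable_pt_lim f x (f' x)) ->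
  (forall x, a <= x <= b -> f' x <= c) -> f b - f a <= c * (b - a).
Proof.
  intros Hab Hd Hc. destruct (Req_dec a b) as [-> | Hne]; [rewrite !Rminus_diag; lra |].
  destruct (MVT_cor2 f f' a b ltac:(lra) Hd) as [x [E Hx]].
  rewrite E. apply Rmult_le_compat_r; [lra | apply Hc; lra].
Qed.

Lemma increases_right_of_derive_pos f t l : derivable_pt_lim f t l -> 0 < l ->
  exists d, 0 < d /\ forall s, t < s < t + d -> f t < f s.
Proof.
  intros H Hl. destruct (H (l / 2) ltac:(lra)) as [[d Hd] Hh].
  exists d. split; [exact Hd |]. intros s Hs.
  specialize (Hh (s - t) ltac:(lra) ltac:(simpl; rewrite Rabs_pos_eq; lra)).
  replace (t + (s - t)) with s in Hh by ring.
  apply Rabs_def2 in Hh. destruct Hh as [_ Hh].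
  assert (Hq : 0 < (f s - f t) / (s - t)) by lra.
  assert (0 < s - t) by lra.
  apply Rmult_lt_compat_r with (r := s - t) in Hq; [| lra].
  unfold Rdiv in Hq. rewrite Rmult_assoc, Rinv_l, Rmult_0_l in Hq by lra. lra.
Qed.

Lemma ge_of_continuity_pt_left f a b c : continuity_pt f b -> a < b ->
  (forall s, a <= s < b -> c <= f s) -> c <= f b.
Proof.
  intros Hc Hab Hs. apply Rnot_lt_le. intros Hlt.
  apply continuity_pt_filterlim in Hc.
  destruct (Hc _ (open_lt c (f b) Hlt)) as [e He].
  set (s := Rmax a (b - e / 2)).
  assert (Has : a <= s < b) by (unfold s; split; [apply Rmax_l | apply Rmax_lub_lt];
    pose proof (cond_pos e); lra).
  assert (Hball : ball b e s).
  { change (Rabs (s - b) < e). rewrite Rabs_left by lra.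
    unfold s. pose proof (Rmax_r a (b - e / 2)). pose proof (cond_pos e). lra. }
  specialize (He s Hball). specialize (Hs s Has). simpl in He. lra.
Qed.

Lemma le_of_continuity_pt_left f a b c : continuity_pt f b -> a < b ->
  (forall s, a <= s < b -> f s <= c) -> f b <= c.
Proof.
  intros Hc Hab Hs.
  enough (- c <= - f b) by lra.
  apply (ge_of_continuity_pt_left (fun s => - f s) a b); auto.
  - apply continuity_pt_opp, Hc.
  - intros s Hs'. specialize (Hs s Hs'). lra.
Qed.

Lemma exit_time (Good : R -> Prop) t1 B : Good t1 ->
  (forall t, Good t -> locally t Good) ->
  (forall t, t1 <= t -> (forall s, t1 <= s <= t -> Good s) -> t <= B) ->
  exists sg, t1 < sg /\ (forall s, t1 <= s < sg -> Good s) /\ ~ Good sg.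
Proof.
  intros H1 Hopen Hbound.
  set (E := fun t => t1 <= t /\ forall s, t1 <= s <= t -> Good s).
  destruct (completeness E) as [sg [Hub Hlub]].
  { exists B. intros t [Ht Hg]. apply Hbound; auto. }
  { exists t1. split; [lra | intros s Hs; replace s with t1 by lra; exact H1]. }
  assert (Hbefore : forall s, t1 <= s < sg -> Good s).
  { intros s Hs. apply NNPP. intros Hns.
    assert (Hsub : is_upper_bound E s).
    { intros t [Ht Hg]. apply Rnot_lt_le. intros Hst. apply Hns, Hg. lra. }
    specialize (Hlub s Hsub). lra. }
  assert (Hextend : forall t, t1 <= t -> (forall s, t1 <= s < t -> Good s) -> Good t ->
            exists t', t < t' /\ E t').
  { intros t Ht Hg Hgt. destruct (Hopen t Hgt) as [e He].
    exists (t + e / 2). pose proof (cond_pos e). split; [lra |].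
    split; [lra |]. intros s Hs. destruct (Rlt_le_dec s t); [apply Hg; lra |].
    apply He. change (Rabs (s - t) < e). rewrite Rabs_pos_eq; lra. }
  destruct (Hextend t1 (Rle_refl _) ltac:(intros; lra) H1) as [t' [Ht' Et']].
  assert (Hsg : t1 < sg) by (specialize (Hub t' Et'); lra).
  exists sg. split; [exact Hsg |]. split; [exact Hbefore |].
  intros Hgsg. destruct (Hextend sg ltac:(lra) Hbefore Hgsg) as [t'' [Ht'' Et'']].
  specialize (Hub t'' Et''). lra.
Qed.

Lemma continuity_pt_near f t e : continuity_pt f t -> 0 < e ->
  exists d, 0 < d /\ forall s, Rabs (s - t) < d -> Rabs (f s - f t) < e.
Proof.
  intros H He. destruct (H e He) as [d [Hd Hs]].
  exists d. split; [exact Hd |]. intros s Hst.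
  destruct (Req_dec s t) as [-> | Hne]; [rewrite Rminus_diag, Rabs_R0; exact He |].
  apply (Hs s). split; [split; [exact I | auto] | exact Hst].
Qed.

Lemma pos_right_of_continuity_pt f t : continuity_pt f t -> 0 < f t ->
  exists d, 0 < d /\ forall s, t < s < t + d -> 0 < f s.
Proof.
  intros Hc Hpos. destruct (continuity_pt_near f t (f t) Hc Hpos) as [d [Hd Hnear]].
  exists d. split; [exact Hd |]. intros s Hs.
  assert (Hst : Rabs (s - t) < d) by (rewrite Rabs_pos_eq; lra).
  pose proof (proj1 (Rabs_lt_between' _ _ _) (Hnear s Hst)). lra.
Qed.

Lemma locally_lt_of_continuity_pt f g t : continuity_pt f t -> continuity_pt g t ->
  f t < g t -> locally t (fun s => f s < g s).
Proof.
  intros Hf Hg Hlt.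
  apply (filter_imp (fun s => 0 < g s - f s)); [intros s Hs; lra |].
  apply (proj1 (continuity_pt_filterlim (fun s => g s - f s) t));
    [apply continuity_pt_minus; assumption | apply open_gt; lra].
Qed.

Lemma continuity_pt_pow_comp (f : R -> R) n t :
  continuity_pt f t -> continuity_pt (fun s => f s ^ n) t.
Proof.
  intros H. apply (continuity_pt_comp f (fun x => x ^ n) t H).
  apply derivable_continuous_pt, derivable_pt_pow.
Qed.

Lemma derivable_pt_lim_pow_comp (f : R -> R) n t l : derivable_pt_lim f t l ->
  derivable_pt_lim (fun s => f s ^ n) t (INR n * f t ^ pred n * l).
Proof.
  intros H. apply (derivable_pt_lim_comp f (fun y => y ^ n)); [exact H |].
  apply derivable_pt_lim_pow.
Qed.

Lemma derivable_pt_lim_comp_opp f t l : derivable_pt_lim f (- t) l ->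
  derivable_pt_lim (fun s => f (- s)) t (- l).
Proof.
  intros H. replace (- l) with (l * -1) by ring.
  apply (derivable_pt_lim_comp (fun s => - s) f t (-1) l); [| exact H].
  exact (derivable_pt_lim_opp id t 1 (derivable_pt_lim_id t)).
Qed.

(** * Global solutions of bounded Lipschitz autonomous equations *)

Lemma lipschitz_continuous {U W : NormedModule R_AbsRing} (g : U -> W) k :
  (forall x y, norm (minus (g x) (g y)) <= k * norm (minus x y)) ->
  forall x, continuous g x.
Proof.
  intros Hg x. apply filterlim_locally. intros eps.
  apply locally_le_locally_norm.
  assert (Hk : 0 < Rabs k + 1) by (pose proof (Rabs_pos k); lra).
  exists (mkposreal _ (Rdiv_lt_0_compat _ _ (cond_pos eps) Hk)).
  intros y Hy. apply norm_compat1. unfold ball_norm in Hy. simpl in Hy.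
  pose proof (Hg y x). pose proof (norm_ge_0 (minus y x)).
  assert (k * norm (minus y x) <= Rabs k * norm (minus y x))
    by (apply Rmult_le_compat_r; [lra | apply Rle_abs]).
  assert ((Rabs k + 1) * norm (minus y x) < eps).
  { apply (Rmult_lt_compat_l (Rabs k + 1)) in Hy; [|lra].
    replace ((Rabs k + 1) * (eps / (Rabs k + 1))) with (pos eps) in Hy by (field; lra).
    exact Hy. }
  nra.
Qed.

Section IntegralBounds.
Context {V : CompleteNormedModule R_AbsRing}.

Lemma ex_RInt_of_continuous (g : R -> V) a b :
  (forall t, continuous g t) -> ex_RInt g a b.
Proof. intros Hg. apply ex_RInt_continuous. intros; apply Hg. Qed.

Lemma RInt_minus_origin (g : R -> V) t t' :
  (forall s, continuous g s) ->
  minus (RInt g 0 t) (RInt g 0 t') = RInt g t' t.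
Proof.
  intros Hg.
  rewrite <- (RInt_Chasles g t' 0 t) by (apply ex_RInt_of_continuous; auto).
  rewrite <- (opp_RInt_swap g 0 t') by (apply ex_RInt_of_continuous; auto).
  unfold minus. rewrite plus_comm. reflexivity.
Qed.

Lemma norm_RInt_le_abs (g : R -> V) c a b :
  (forall s, continuous g s) -> (forall s, norm (g s) <= c) ->
  norm (RInt g a b) <= c * Rabs (b - a).
Proof.
  intros Hg Hc. rewrite Rmult_comm.
  apply (norm_RInt_le_const_abs g); auto.
  apply RInt_correct, ex_RInt_of_continuous; auto.
Qed.

Lemma norm_RInt_le_pow (g : R -> V) c n t :
  (forall s, continuous g s) ->
  (forall s, Rabs s <= Rabs t -> norm (g s) <= c * Rabs s ^ n) ->
  norm (RInt g 0 t) <= c * Rabs t ^ S n / INR (S n).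
Proof.
  intros Hg Hc.
  assert (HSn : INR (S n) <> 0) by (apply not_0_INR; lia).
  assert (Hcont : forall (h : R -> R) x, ex_derive h x -> continuous h x)
    by (intros; apply (@ex_derive_continuous R_AbsRing R_NormedModule); auto).
  destruct (Rle_lt_dec 0 t) as [Ht | Ht].
  - rewrite Rabs_pos_eq by lra.
    apply (norm_RInt_le g (fun s => c * s ^ n) 0 t); auto.
    + intros s Hs. specialize (Hc s). rewrite !Rabs_pos_eq in Hc by lra. apply Hc; lra.
    + apply RInt_correct, ex_RInt_of_continuous; auto.
    + replace (c * t ^ S n / INR (S n))
        with (minus (c * t ^ S n / INR (S n)) (c * 0 ^ S n / INR (S n)))
        by (unfold minus, plus, opp; simpl; field; auto).
      apply (is_RInt_derive (fun s => c * s ^ S n / INR (S n))).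
      * intros s _. auto_derive; auto.
        change (match n with O => 1 | S _ => INR n + 1 end) with (INR (S n)). field. auto.
      * intros s _. apply Hcont. auto_derive. auto.
  - rewrite Rabs_left by lra.
    replace (norm (RInt g 0 t)) with (norm (RInt g t 0)).
    2:{ rewrite <- (opp_RInt_swap g t 0) by (apply ex_RInt_of_continuous; auto).
        symmetry. exact (norm_opp _). }
    apply (norm_RInt_le g (fun s => c * (- s) ^ n) t 0); try lra.
    + intros s Hs. specialize (Hc s). rewrite !Rabs_left1 in Hc by lra. apply Hc; lra.
    + apply RInt_correct, ex_RInt_of_continuous; auto.
    + replace (c * (- t) ^ S n / INR (S n))
        with (minus (- (c * (- 0) ^ S n / INR (S n))) (- (c * (- t) ^ S n / INR (S n))))
        by (unfold minus, plus, opp; simpl; field; auto).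
      apply (is_RInt_derive (fun s => - (c * (- s) ^ S n / INR (S n)))).
      * intros s _. auto_derive; auto.
        change (match n with O => 1 | S _ => INR n + 1 end) with (INR (S n)). field. auto.
      * intros s _. apply Hcont. auto_derive. auto.
Qed.

Lemma norm_RInt_le_const_origin (g : R -> V) c t :
  (forall s, continuous g s) ->
  (forall s, Rabs s <= Rabs t -> norm (g s) <= c) ->
  norm (RInt g 0 t) <= c * Rabs t.
Proof.
  intros Hg Hc.
  replace (c * Rabs t) with (c * Rabs t ^ 1 / INR 1) by (simpl; field).
  apply norm_RInt_le_pow; auto.
  intros s Hs. rewrite pow_O, Rmult_1_r. auto.
Qed.

End IntegralBounds.

(* Rewriting with Coquelicot's algebraic lemmas only matches the canonical instance path:
   hence [change] instead of [unfold minus] below, and statements about a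
   [CompleteNormedModule] rather than a [NormedModule]. *)
Lemma minus_plus_l {G : AbelianGroup} (x a b : G) :
  minus (plus x a) (plus x b) = minus a b.
Proof.
  change (plus (plus x a) (opp (plus x b)) = plus a (opp b)).
  rewrite opp_plus, (plus_comm x a), <- plus_assoc, (plus_assoc x), plus_opp_r,
    plus_zero_l. reflexivity.
Qed.

Lemma minus_plus_self {G : AbelianGroup} (x a : G) : minus (plus x a) x = a.
Proof.
  change (plus (plus x a) (opp x) = a).
  rewrite (plus_comm x a), <- plus_assoc, plus_opp_r, plus_zero_r. reflexivity.
Qed.

Lemma norm_minus_self {V : CompleteNormedModule R_AbsRing} (x : V) : norm (minus x x) = 0.
Proof. rewrite minus_eq_zero. exact norm_zero. Qed.

Lemma norm_minus_sym {V : CompleteNormedModule R_AbsRing} (x y : V) :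
  norm (minus x y) = norm (minus y x).
Proof. rewrite <- opp_minus. exact (norm_opp _). Qed.

Lemma norm_minus_triangle {V : CompleteNormedModule R_AbsRing} (x y z : V) :
  norm (minus x z) <= norm (minus x y) + norm (minus y z).
Proof. rewrite (minus_trans y). exact (norm_triangle _ _). Qed.

Lemma norm_minus_le_of_cvg {V : CompleteNormedModule R_AbsRing} (u : nat -> V) l x e :
  filterlim u eventually (locally l) ->
  eventually (fun m => norm (minus (u m) x) <= e) ->
  norm (minus l x) <= e.
Proof.
  intros Hl He. apply le_epsilon. intros d Hd.
  pose proof (@norm_factor_gt_0 R_AbsRing V) as Hf.
  assert (Hdf : 0 < d / @norm_factor R_AbsRing V) by (apply Rdiv_lt_0_compat; auto).
  destruct (filter_and _ _ He (proj1 (filterlim_locally u l) Hl (mkposreal _ Hdf)))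
    as [N HN].
  destruct (HN N (Nat.le_refl N)) as [HuN Hball].
  assert (Hb : norm (minus (u N) l) < d).
  { replace d with (@norm_factor R_AbsRing V * (d / @norm_factor R_AbsRing V))
      by (field; lra).
    exact (norm_compat2 _ _ _ Hball). }
  pose proof (norm_minus_triangle l (u N) x).
  rewrite norm_minus_sym in Hb. lra.
Qed.

Lemma eq_of_norm_minus_le {V : CompleteNormedModule R_AbsRing} (a b : V) :
  (forall d, 0 < d -> norm (minus a b) <= d) -> a = b.
Proof.
  intros H. symmetry. apply eq_close. intros eps.
  assert (Hd : norm (minus a b) < eps).
  { apply Rle_lt_trans with (eps / 2); [apply H, is_pos_div_2 | apply Rlt_eps2_eps, cond_pos]. }
  exact (norm_compat1 _ _ _ Hd).
Qed.

Section Picard.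
Context {V : CompleteNormedModule R_AbsRing}.
Variables (f : V -> V) (x0 : V) (M L : R).
Hypothesis f_bounded : forall x, norm (f x) <= M.
Hypothesis f_lipschitz : forall x y, norm (minus (f x) (f y)) <= L * norm (minus x y).
Hypothesis L_pos : 0 < L.

Fixpoint picard (n : nat) (t : R) : V :=
  match n with
  | O => x0
  | S n => plus x0 (RInt (fun s => f (picard n s)) 0 t)
  end.

Lemma bound_nonneg : 0 <= M.
Proof. exact (Rle_trans _ _ _ (norm_ge_0 (f x0)) (f_bounded x0)). Qed.

Lemma f_comp_continuous (y : R -> V) :
  (forall t, continuous y t) -> forall t, continuous (fun s => f (y s)) t.
Proof.
  intros Hy t. apply (continuous_comp y f); auto.
  apply (lipschitz_continuous f L f_lipschitz).
Qed.

Lemma picard_lipschitz n t t' :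
  norm (minus (picard n t) (picard n t')) <= M * Rabs (t - t').
Proof.
  pose proof bound_nonneg. revert t t'.
  induction n as [|n IH]; intros t t'; simpl.
  - rewrite (norm_minus_self (V := V)). apply Rmult_le_pos; auto. apply Rabs_pos.
  - assert (Hc : forall s, continuous (fun s => f (picard n s)) s).
    { apply f_comp_continuous, (lipschitz_continuous (picard n) M), IH. }
    rewrite (minus_plus_l (G := V)), RInt_minus_origin by exact Hc.
    apply norm_RInt_le_abs; auto.
Qed.

Lemma picard_continuous n t : continuous (picard n) t.
Proof. apply (lipschitz_continuous (picard n) M), picard_lipschitz. Qed.

Lemma f_picard_continuous n t : continuous (fun s => f (picard n s)) t.
Proof. apply f_comp_continuous, picard_continuous. Qed.

Lemma picard_step n t :
  norm (minus (picard (S n) t) (picard n t))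
  <= M * L ^ n * Rabs t ^ S n / INR (fact (S n)).
Proof.
  revert t. induction n as [|n IH]; intros t.
  - simpl picard. rewrite (minus_plus_self (G := V)).
    replace (M * L ^ 0 * Rabs t ^ 1 / INR (fact 1)) with (M * Rabs t ^ 1 / INR 1)
      by (simpl; field).
    apply norm_RInt_le_pow.
    + intros; apply f_comp_continuous. intros; apply continuous_const.
    + intros s _. rewrite pow_O, Rmult_1_r. apply f_bounded.
  - change (picard (S (S n)) t) with (plus x0 (RInt (fun s => f (picard (S n) s)) 0 t)).
    change (picard (S n) t) with (plus x0 (RInt (fun s => f (picard n s)) 0 t)).
    rewrite (minus_plus_l (G := V)), <- RInt_minus
      by (apply ex_RInt_of_continuous, f_picard_continuous).
    set (c := M * L ^ S n / INR (fact (S n))).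
    replace (M * L ^ S n * Rabs t ^ S (S n) / INR (fact (S (S n))))
      with (c * Rabs t ^ S (S n) / INR (S (S n)))
      by (unfold c; rewrite (fact_simpl (S n)), mult_INR; field;
          split; [apply INR_fact_neq_0 | apply not_0_INR; lia]).
    apply norm_RInt_le_pow.
    + intros s. apply (continuous_minus (fun s => f (picard (S n) s)));
        apply f_picard_continuous.
    + intros s _. eapply Rle_trans. apply f_lipschitz.
      unfold c. specialize (IH s). unfold Rdiv in *.
      replace (M * L ^ S n * / INR (fact (S n)) * Rabs s ^ S n)
        with (L * (M * L ^ n * Rabs s ^ S n * / INR (fact (S n)))) by (simpl; ring).
      apply Rmult_le_compat_l; lra.
Qed.

Lemma picard_diff_le_exp_tail T t n k : Rabs t <= T ->
  norm (minus (picard (n + k) t) (picard n t))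
  <= M / L * (sum_f_R0 (fun j => / INR (fact j) * (L * T) ^ j) (n + k)
              - sum_f_R0 (fun j => / INR (fact j) * (L * T) ^ j) n).
Proof.
  intros Ht. pose proof bound_nonneg as HM. induction k as [|k IH].
  - rewrite Nat.add_0_r, (norm_minus_self (V := V)). lra.
  - rewrite Nat.add_succ_r.
    eapply Rle_trans. apply (norm_minus_triangle (V := V) _ (picard (n + k) t)).
    rewrite tech5.
    assert (Hstep : M * L ^ (n + k) * Rabs t ^ S (n + k) / INR (fact (S (n + k)))
                    <= M / L * (/ INR (fact (S (n + k))) * (L * T) ^ S (n + k))).
    { pose proof (INR_fact_lt_0 (S (n + k))).
      assert (Rabs t ^ S (n + k) <= T ^ S (n + k))
        by (apply pow_incr; split; [apply Rabs_pos | exact Ht]).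
      assert (0 <= L ^ (n + k)) by (apply pow_le; lra).
      rewrite Rpow_mult_distr.
      replace (M / L * (/ INR (fact (S (n + k))) * (L ^ S (n + k) * T ^ S (n + k))))
        with (M * L ^ (n + k) * T ^ S (n + k) / INR (fact (S (n + k))))
        by (rewrite <- !tech_pow_Rmult; field; lra).
      unfold Rdiv. apply Rmult_le_compat_r; [left; apply Rinv_0_lt_compat; lra |].
      apply Rmult_le_compat_l; [apply Rmult_le_pos |]; lra. }
    pose proof (picard_step (n + k) t).
    rewrite Rmult_minus_distr_l, Rmult_plus_distr_l. rewrite Rmult_minus_distr_l in IH. lra.
Qed.

Lemma picard_uniformly_cauchy T e : 0 <= T -> 0 < e ->
  exists N, forall n m t, (N <= n <= m)%nat -> Rabs t <= T ->
    norm (minus (picard m t) (picard n t)) <= e.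
Proof.
  intros HT He. pose proof bound_nonneg as HM.
  destruct (exist_exp (L * T)) as [l Hl].
  set (e' := e * L / (M + 1)).
  assert (He' : 0 < e') by (unfold e'; apply Rdiv_lt_0_compat; nra).
  destruct (CV_Cauchy _ (exist _ l Hl) e' He') as [N HN].
  exists N. intros n m t [Hn Hnm] Ht.
  replace m with (n + (m - n))%nat by lia.
  eapply Rle_trans. apply picard_diff_le_exp_tail, Ht.
  specialize (HN (n + (m - n))%nat n ltac:(lia) ltac:(lia)).
  unfold R_dist in HN. apply Rabs_def2 in HN.
  apply Rle_trans with (M / L * e').
  - apply Rmult_le_compat_l; [apply Rdiv_le_0_compat |]; lra.
  - unfold e'. replace (M / L * (e * L / (M + 1))) with (e * (M / (M + 1)))
      by (field; lra).
    assert (M / (M + 1) <= 1)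
      by (apply Rmult_le_reg_r with (M + 1); [lra|]; unfold Rdiv;
          rewrite Rmult_assoc, Rinv_l; lra).
    nra.
Qed.

Definition picard_limit (t : R) : V := lim (filtermap (fun n => picard n t) eventually).

Lemma picard_cvg t : filterlim (fun n => picard n t) eventually (locally (picard_limit t)).
Proof.
  apply filterlim_locally. intros eps.
  apply (complete_cauchy (filtermap (fun n => picard n t) eventually)).
  - apply filtermap_proper_filter, eventually_filter.
  - intros e. destruct (picard_uniformly_cauchy (Rabs t) (e / 2) (Rabs_pos t))
      as [N HN]; [apply is_pos_div_2 |].
    exists (picard N t). exists N. intros n Hn.
    assert (Hd : norm (minus (picard n t) (picard N t)) < e).
    { eapply Rle_lt_trans. apply (HN N n t); [lia | lra].
      apply Rlt_eps2_eps, cond_pos. }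
    exact (norm_compat1 _ _ _ Hd).
Qed.

Lemma picard_limit_approx T e : 0 <= T -> 0 < e ->
  exists N, forall n t, (N <= n)%nat -> Rabs t <= T ->
    norm (minus (picard_limit t) (picard n t)) <= e.
Proof.
  intros HT He. destruct (picard_uniformly_cauchy T e HT He) as [N HN].
  exists N. intros n t Hn Ht.
  apply (norm_minus_le_of_cvg _ _ _ _ (picard_cvg t)).
  exists n. intros m Hm. apply HN; [lia | exact Ht].
Qed.

Lemma picard_limit_lipschitz t t' :
  norm (minus (picard_limit t) (picard_limit t')) <= M * Rabs (t - t').
Proof.
  apply le_epsilon. intros d Hd.
  destruct (picard_limit_approx (Rmax (Rabs t) (Rabs t')) (d / 2)) as [N HN];
    [apply (Rle_trans _ _ _ (Rabs_pos t)), Rmax_l | lra |].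
  pose proof (HN N t (Nat.le_refl N) (Rmax_l _ _)) as Ht.
  pose proof (HN N t' (Nat.le_refl N) (Rmax_r _ _)) as Ht'.
  rewrite norm_minus_sym in Ht'.
  pose proof (picard_lipschitz N t t').
  pose proof (norm_minus_triangle (picard_limit t) (picard N t) (picard_limit t')).
  pose proof (norm_minus_triangle (picard N t) (picard N t') (picard_limit t')).
  lra.
Qed.

Lemma f_picard_limit_continuous t : continuous (fun s => f (picard_limit s)) t.
Proof.
  apply f_comp_continuous. intros s.
  apply (lipschitz_continuous picard_limit M), picard_limit_lipschitz.
Qed.

Lemma picard_limit_integral t :
  picard_limit t = plus x0 (RInt (fun s => f (picard_limit s)) 0 t).
Proof.
  apply eq_of_norm_minus_le. intros d Hd.
  assert (Ht : 0 < 1 + L * Rabs t) by (pose proof (Rabs_pos t); nra).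
  set (e := d / (1 + L * Rabs t)).
  destruct (picard_limit_approx (Rabs t) e (Rabs_pos t)) as [N HN];
    [apply Rdiv_lt_0_compat; lra |].
  pose proof (HN (S N) t ltac:(lia) (Rle_refl _)) as Happrox.
  assert (Hint : norm (minus (picard (S N) t)
                   (plus x0 (RInt (fun s => f (picard_limit s)) 0 t))) <= L * e * Rabs t).
  { simpl picard. rewrite (minus_plus_l (G := V)), <- RInt_minus
      by (apply ex_RInt_of_continuous; intros; apply f_picard_continuous
          || apply f_picard_limit_continuous).
    apply norm_RInt_le_const_origin.
    - intros s. apply (continuous_minus (fun s => f (picard N s)));
        [apply f_picard_continuous | apply f_picard_limit_continuous].
    - intros s Hs. eapply Rle_trans. apply f_lipschitz.
      apply Rmult_le_compat_l; [lra |].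
      rewrite norm_minus_sym. apply HN; [lia | exact Hs]. }
  pose proof (norm_minus_triangle (picard_limit t) (picard (S N) t)
                (plus x0 (RInt (fun s => f (picard_limit s)) 0 t))).
  replace d with (e + L * e * Rabs t) by (unfold e; field; lra).
  lra.
Qed.

Lemma picard_limit_derive t : is_derive picard_limit t (f (picard_limit t)).
Proof.
  apply (is_derive_ext (fun t => plus x0 (RInt (fun s => f (picard_limit s)) 0 t))).
  { intros s. symmetry. apply picard_limit_integral. }
  replace (f (picard_limit t)) with (plus zero (f (picard_limit t)))
    by exact (plus_zero_l _).
  assert (HI : is_derive (fun t => RInt (fun s => f (picard_limit s)) 0 t) t
                (f (picard_limit t))).
  { apply (is_derive_RInt (fun s => f (picard_limit s)) _ 0); [| apply f_picard_limit_continuous].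
    apply filter_forall. intros b.
    apply RInt_correct, ex_RInt_of_continuous, f_picard_limit_continuous. }
  exact (is_derive_plus _ _ _ _ _ (is_derive_const x0 t) HI).
Qed.

Theorem ode_global_existence :
  exists y : R -> V, y 0 = x0 /\ forall t, is_derive y t (f (y t)).
Proof.
  exists picard_limit. split; [| exact picard_limit_derive].
  rewrite picard_limit_integral, RInt_point. exact (plus_zero_r _).
Qed.

End Picard.

(* Coquelicot's complex numbers [C] are its complete normed real plane [R * R]. *)
Lemma derivable_pt_lim_fst (y : R -> C) t l :
  is_derive (V := C_R_NormedModule) y t l -> derivable_pt_lim (fun s => fst (y s)) t (fst l).
Proof.
  intros H. apply is_derive_Reals.
  exact (filterdiff_comp y fst _ fst H (filterdiff_linear _ is_linear_fst)).
Qed.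

Lemma derivable_pt_lim_snd (y : R -> C) t l :
  is_derive (V := C_R_NormedModule) y t l -> derivable_pt_lim (fun s => snd (y s)) t (snd l).
Proof.
  intros H. apply is_derive_Reals.
  exact (filterdiff_comp y snd _ snd H (filterdiff_linear _ is_linear_snd)).
Qed.

Lemma norm_C_le (z : C) :
  norm (V := C_R_NormedModule) z <= sqrt 2 * Rmax (Rabs (fst z)) (Rabs (snd z)).
Proof. destruct z as [x y]. exact (proj2 (norm_prod (V := R_NormedModule) x y)). Qed.

Lemma Rabs_fst_snd_le_norm_C (z : C) :
  Rabs (fst z) <= norm (V := C_R_NormedModule) z /\ Rabs (snd z) <= norm (V := C_R_NormedModule) z.
Proof.
  destruct z as [x y]. pose proof (proj1 (norm_prod (V := R_NormedModule) x y)) as H.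
  split; eapply Rle_trans; [| exact H | | exact H]; [apply Rmax_l | apply Rmax_r].
Qed.

Theorem planar_ode_global_existence (f1 f2 : R -> R -> R) a b M L :
  (forall x y, Rabs (f1 x y) <= M) -> (forall x y, Rabs (f2 x y) <= M) ->
  (forall x y x' y', Rabs (f1 x y - f1 x' y') <= L * (Rabs (x - x') + Rabs (y - y'))) ->
  (forall x y x' y', Rabs (f2 x y - f2 x' y') <= L * (Rabs (x - x') + Rabs (y - y'))) ->
  0 < L ->
  exists u v : R -> R, u 0 = a /\ v 0 = b /\
    forall t, derivable_pt_lim u t (f1 (u t) (v t)) /\
              derivable_pt_lim v t (f2 (u t) (v t)).
Proof.
  intros HM1 HM2 HL1 HL2 HL.
  set (F := fun z : C => (f1 (fst z) (snd z), f2 (fst z) (snd z)) : C).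
  assert (Hs2 : 1 <= sqrt 2) by (rewrite <- sqrt_1; apply sqrt_le_1_alt; lra).
  assert (HF : forall z, norm (V := C_R_NormedModule) (F z) <= sqrt 2 * M).
  { intros z. eapply Rle_trans; [apply norm_C_le |].
    apply Rmult_le_compat_l; [lra |]. apply Rmax_lub; [apply HM1 | apply HM2]. }
  assert (HFL : forall z z', norm (V := C_R_NormedModule) (minus (F z) (F z'))
                            <= 2 * sqrt 2 * L * norm (V := C_R_NormedModule) (minus z z')).
  { intros z z'. eapply Rle_trans; [apply norm_C_le |].
    destruct (Rabs_fst_snd_le_norm_C (minus z z')) as [Hx Hy].
    change (fst (minus z z')) with (fst z - fst z') in Hx.
    change (snd (minus z z')) with (snd z - snd z') in Hy.
    set (n := norm (V := C_R_NormedModule) (minus z z')) in *.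
    apply Rle_trans with (sqrt 2 * (L * (n + n))); [| right; ring].
    apply Rmult_le_compat_l; [lra |].
    apply Rmax_lub.
    - eapply Rle_trans; [apply HL1 |]. apply Rmult_le_compat_l; lra.
    - eapply Rle_trans; [apply HL2 |]. apply Rmult_le_compat_l; lra. }
  destruct (ode_global_existence (V := C_R_CompleteNormedModule) F (a, b) _ _ HF HFL)
    as [y [Hy0 Hy]]; [nra |].
  exists (fun t => fst (y t)), (fun t => snd (y t)).
  rewrite Hy0. split; [reflexivity | split; [reflexivity |]].
  intros t. split.
  - exact (derivable_pt_lim_fst y t _ (Hy t)).
  - exact (derivable_pt_lim_snd y t _ (Hy t)).
Qed.

(** * The coalbedo and the vector field *)

Definition coalbedo_slope (Tm Tp bm bp : R) : R := (bp - bm) / (Tp - Tm).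

Section Coalbedo.
Variables Tm Tp bm bp : R.
Hypothesis hT : Tm < Tp.
Hypothesis hb : bm < bp.

Lemma coalbedo_slope_pos : 0 < coalbedo_slope Tm Tp bm bp.
Proof. apply Rdiv_lt_0_compat; lra. Qed.

Lemma coalbedo_cases T :
  (T <= Tm /\ coalbedo Tm Tp bm bp T = bm) \/
  (Tp <= T /\ coalbedo Tm Tp bm bp T = bp) \/
  (Tm < T < Tp /\ coalbedo Tm Tp bm bp T = bm + coalbedo_slope Tm Tp bm bp * (T - Tm)).
Proof.
  unfold coalbedo, coalbedo_slope.
  destruct (Rle_dec T Tm); [left; lra |].
  destruct (Rle_dec Tp T); [right; left; lra |].
  right; right. split; [lra | field; lra].
Qed.

Lemma coalbedo_bounds T : bm <= coalbedo Tm Tp bm bp T <= bp.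
Proof.
  pose proof coalbedo_slope_pos.
  assert (coalbedo_slope Tm Tp bm bp * (Tp - Tm) = bp - bm)
    by (unfold coalbedo_slope; field; lra).
  destruct (coalbedo_cases T) as [[? ->] | [[? ->] | [? ->]]]; nra.
Qed.

Lemma coalbedo_lipschitz x y :
  Rabs (coalbedo Tm Tp bm bp x - coalbedo Tm Tp bm bp y)
  <= coalbedo_slope Tm Tp bm bp * Rabs (x - y).
Proof.
  pose proof coalbedo_slope_pos.
  assert (coalbedo_slope Tm Tp bm bp * (Tp - Tm) = bp - bm)
    by (unfold coalbedo_slope; field; lra).
  destruct (coalbedo_cases x) as [[? ->] | [[? ->] | [? ->]]];
  destruct (coalbedo_cases y) as [[? ->] | [[? ->] | [? ->]]];
  apply Rabs_le; split; unfold Rabs; destruct (Rcase_abs (x - y)); nra.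
Qed.

End Coalbedo.

Lemma coalbedo_continuity Tm Tp bm bp : Tm < Tp -> bm < bp ->
  continuity (coalbedo Tm Tp bm bp).
Proof.
  intros hT hb x e He. pose proof (coalbedo_slope_pos Tm Tp bm bp hT hb).
  exists (e / coalbedo_slope Tm Tp bm bp). split; [apply Rdiv_lt_0_compat; lra |].
  intros y [_ Hy]. simpl in *. unfold R_dist in *.
  eapply Rle_lt_trans; [apply coalbedo_lipschitz; lra |].
  apply Rmult_lt_compat_l with (r := coalbedo_slope Tm Tp bm bp) in Hy; [| lra].
  replace (coalbedo_slope Tm Tp bm bp * (e / coalbedo_slope Tm Tp bm bp)) with e
    in Hy by (field; lra).
  exact Hy.
Qed.

Lemma pow4_lipschitz x y K : Rabs x <= K -> Rabs y <= K ->
  Rabs (x ^ 4 - y ^ 4) <= 4 * K ^ 3 * Rabs (x - y).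
Proof.
  intros Hx Hy.
  replace (x ^ 4 - y ^ 4) with ((x - y) * (x ^ 3 + x ^ 2 * y + x * y ^ 2 + y ^ 3)) by ring.
  rewrite Rabs_mult, Rmult_comm. apply Rmult_le_compat_r; [apply Rabs_pos |].
  assert (HK : 0 <= K) by (pose proof (Rabs_pos x); lra).
  pose proof (Rabs_pos x). pose proof (Rabs_pos y).
  assert (A1 : Rabs (x ^ 3) <= K ^ 3) by (rewrite <- RPow_abs; apply pow_incr; lra).
  assert (A2 : Rabs (x ^ 2 * y) <= K ^ 3).
  { rewrite Rabs_mult, <- RPow_abs. replace (K ^ 3) with (K ^ 2 * K) by ring.
    apply Rmult_le_compat; try apply pow_le; auto. apply pow_incr; lra. }
  assert (A3 : Rabs (x * y ^ 2) <= K ^ 3).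
  { rewrite Rabs_mult, <- RPow_abs. replace (K ^ 3) with (K * K ^ 2) by ring.
    apply Rmult_le_compat; try apply pow_le; auto. apply pow_incr; lra. }
  assert (A4 : Rabs (y ^ 3) <= K ^ 3) by (rewrite <- RPow_abs; apply pow_incr; lra).
  pose proof (Rabs_triang (x ^ 3 + x ^ 2 * y + x * y ^ 2) (y ^ 3)).
  pose proof (Rabs_triang (x ^ 3 + x ^ 2 * y) (x * y ^ 2)).
  pose proof (Rabs_triang (x ^ 3) (x ^ 2 * y)).
  lra.
Qed.

Lemma pow4_sub_ge x y : 0 <= y <= x -> y ^ 3 * (x - y) <= x ^ 4 - y ^ 4.
Proof.
  intros H.
  replace (x ^ 4 - y ^ 4) with ((x - y) * (x ^ 3 + x ^ 2 * y + x * y ^ 2 + y ^ 3)) by ring.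
  rewrite Rmult_comm. apply Rmult_le_compat_l; [lra |].
  assert (0 <= x ^ 3) by (apply pow_le; lra).
  assert (0 <= x ^ 2 * y) by (apply Rmult_le_pos; [apply pow_le |]; lra).
  assert (0 <= x * y ^ 2) by (apply Rmult_le_pos; [| apply pow_le]; lra).
  lra.
Qed.

Definition clamp (lo hi x : R) : R := Rmax lo (Rmin hi x).

Lemma clamp_bounds lo hi x : lo <= hi -> lo <= clamp lo hi x <= hi.
Proof.
  intros H. unfold clamp. split; [apply Rmax_l |].
  apply Rmax_lub; [exact H | apply Rmin_l].
Qed.

Lemma clamp_id lo hi x : lo <= x <= hi -> clamp lo hi x = x.
Proof. intros H. unfold clamp. rewrite Rmin_right, Rmax_right; lra. Qed.

Lemma clamp_lipschitz lo hi x y : lo <= hi ->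
  Rabs (clamp lo hi x - clamp lo hi y) <= Rabs (x - y).
Proof.
  intros H. unfold clamp, Rmax, Rmin.
  repeat destruct (Rle_dec _ _); apply Rabs_le; split;
    unfold Rabs; destruct (Rcase_abs (x - y)); lra.
Qed.

Definition lipschitz_on_box (a b k : R) (g : R -> R -> R) : Prop :=
  forall x y x' y', 0 <= x <= a -> 0 <= y <= b -> 0 <= x' <= a -> 0 <= y' <= b ->
    Rabs (g x y - g x' y') <= k * (Rabs (x - x') + Rabs (y - y')).

Lemma lipschitz_on_box_scal a b k c g : lipschitz_on_box a b k g ->
  lipschitz_on_box a b (Rabs c * k) (fun x y => c * g x y).
Proof.
  intros Hg x y x' y' Hx Hy Hx' Hy'.
  rewrite <- Rmult_minus_distr_l, Rabs_mult, Rmult_assoc.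
  apply Rmult_le_compat_l; [apply Rabs_pos | auto].
Qed.

Section ClampedExtension.
Variables (a b k : R) (g : R -> R -> R).
Hypothesis ha : 0 <= a.
Hypothesis hb : 0 <= b.
Hypothesis hk : 0 <= k.
Hypothesis hg : lipschitz_on_box a b k g.

Definition clamped (x y : R) : R := g (clamp 0 a x) (clamp 0 b y).

Lemma clamped_lipschitz x y x' y' :
  Rabs (clamped x y - clamped x' y') <= k * (Rabs (x - x') + Rabs (y - y')).
Proof.
  unfold clamped.
  pose proof (clamp_bounds 0 a x ha). pose proof (clamp_bounds 0 a x' ha).
  pose proof (clamp_bounds 0 b y hb). pose proof (clamp_bounds 0 b y' hb).
  pose proof (clamp_lipschitz 0 a x x' ha). pose proof (clamp_lipschitz 0 b y y' hb).
  eapply Rle_trans; [apply hg; auto |].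
  apply Rmult_le_compat_l; lra.
Qed.

Lemma clamped_bounded x y : Rabs (clamped x y) <= Rabs (g 0 0) + k * (a + b).
Proof.
  unfold clamped.
  pose proof (clamp_bounds 0 a x ha). pose proof (clamp_bounds 0 b y hb).
  pose proof (hg (clamp 0 a x) (clamp 0 b y) 0 0 ltac:(lra) ltac:(lra) ltac:(lra) ltac:(lra))
    as Hlip.
  rewrite !Rminus_0_r, (Rabs_pos_eq (clamp 0 a x)), (Rabs_pos_eq (clamp 0 b y)) in Hlip
    by lra.
  pose proof (Rabs_triang_inv (g (clamp 0 a x) (clamp 0 b y)) (g 0 0)).
  assert (k * (clamp 0 a x + clamp 0 b y) <= k * (a + b)) by (apply Rmult_le_compat_l; lra).
  lra.
Qed.

End ClampedExtension.

Definition fa (eps sB x y : R) : R := eps * sB * (y ^ 4 - 2 * x ^ 4).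

Definition fs (eps sB q Tm Tp bm bp x y : R) : R :=
  - sB * y ^ 4 + eps * sB * x ^ 4 + q * coalbedo Tm Tp bm bp y.

Lemma Fa_eq_fa eps sB x y : 0 <= x -> 0 <= y -> Fa eps sB x y = fa eps sB x y.
Proof. intros Hx Hy. unfold Fa, fa. rewrite !Rabs_pos_eq by lra. ring. Qed.

Lemma Fs_eq_fs eps sB q Tm Tp bm bp x y : 0 <= x -> 0 <= y ->
  Fs eps sB q Tm Tp bm bp x y = fs eps sB q Tm Tp bm bp x y.
Proof. intros Hx Hy. unfold Fs, fs. rewrite !Rabs_pos_eq by lra. ring. Qed.

Lemma pow4_lipschitz_on x x' K : 0 <= x <= K -> 0 <= x' <= K ->
  Rabs (x ^ 4 - x' ^ 4) <= 4 * K ^ 3 * Rabs (x - x').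
Proof. intros Hx Hx'. apply pow4_lipschitz; rewrite Rabs_pos_eq; lra. Qed.

Lemma fa_lipschitz_on_box eps sB a b : 0 <= eps -> 0 <= sB -> 0 <= a -> 0 <= b ->
  lipschitz_on_box a b (8 * (eps * sB) * (a + b) ^ 3) (fa eps sB).
Proof.
  intros he hs ha hb x y x' y' Hx Hy Hx' Hy'. unfold fa.
  pose proof (pow4_lipschitz_on x x' (a + b) ltac:(lra) ltac:(lra)).
  pose proof (pow4_lipschitz_on y y' (a + b) ltac:(lra) ltac:(lra)).
  assert (0 <= eps * sB) by (apply Rmult_le_pos; lra).
  assert (0 <= (a + b) ^ 3) by (apply pow_le; lra).
  replace (eps * sB * (y ^ 4 - 2 * x ^ 4) - eps * sB * (y' ^ 4 - 2 * x' ^ 4))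
    with (eps * sB * ((y ^ 4 - y' ^ 4) + -2 * (x ^ 4 - x' ^ 4))) by ring.
  rewrite Rabs_mult, (Rabs_pos_eq (eps * sB)) by lra.
  pose proof (Rabs_triang (y ^ 4 - y' ^ 4) (-2 * (x ^ 4 - x' ^ 4))) as Htri.
  rewrite Rabs_mult, (Rabs_left (-2)) in Htri by lra.
  pose proof (Rabs_pos (x - x')). pose proof (Rabs_pos (y - y')).
  assert (Hsum : Rabs (y ^ 4 - y' ^ 4 + -2 * (x ^ 4 - x' ^ 4))
                 <= 8 * (a + b) ^ 3 * (Rabs (x - x') + Rabs (y - y'))).
  { assert (0 <= (a + b) ^ 3 * Rabs (y - y')) by (apply Rmult_le_pos; lra). lra. }
  apply Rmult_le_compat_l with (r := eps * sB) in Hsum; [| lra].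
  replace (8 * (eps * sB) * (a + b) ^ 3 * (Rabs (x - x') + Rabs (y - y')))
    with (eps * sB * (8 * (a + b) ^ 3 * (Rabs (x - x') + Rabs (y - y')))) by ring.
  exact Hsum.
Qed.

Lemma fs_lipschitz_on_box eps sB q Tm Tp bm bp a b :
  0 <= eps -> 0 <= sB -> 0 <= q -> Tm < Tp -> bm < bp -> 0 <= a -> 0 <= b ->
  lipschitz_on_box a b
    (4 * (1 + eps) * sB * (a + b) ^ 3 + q * coalbedo_slope Tm Tp bm bp)
    (fs eps sB q Tm Tp bm bp).
Proof.
  intros he hs hq hT hb ha hb0 x y x' y' Hx Hy Hx' Hy'. unfold fs.
  pose proof (pow4_lipschitz_on x x' (a + b) ltac:(lra) ltac:(lra)) as Px.
  pose proof (pow4_lipschitz_on y y' (a + b) ltac:(lra) ltac:(lra)) as Py.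
  pose proof (coalbedo_lipschitz Tm Tp bm bp hT hb y y') as Pb.
  pose proof (coalbedo_slope_pos Tm Tp bm bp hT hb).
  assert (0 <= (a + b) ^ 3) by (apply pow_le; lra).
  pose proof (Rabs_pos (x - x')). pose proof (Rabs_pos (y - y')).
  replace (- sB * y ^ 4 + eps * sB * x ^ 4 + q * coalbedo Tm Tp bm bp y -
           (- sB * y' ^ 4 + eps * sB * x' ^ 4 + q * coalbedo Tm Tp bm bp y'))
    with (- sB * (y ^ 4 - y' ^ 4) + eps * sB * (x ^ 4 - x' ^ 4)
          + q * (coalbedo Tm Tp bm bp y - coalbedo Tm Tp bm bp y')) by ring.
  eapply Rle_trans; [apply Rabs_triang |].
  eapply Rle_trans; [apply Rplus_le_compat_r, Rabs_triang |].
  rewrite !Rabs_mult, Rabs_Ropp, !Rabs_pos_eq by (try apply Rmult_le_pos; lra).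
  assert (sB * Rabs (y ^ 4 - y' ^ 4) <= sB * (4 * (a + b) ^ 3 * Rabs (y - y')))
    by (apply Rmult_le_compat_l; lra).
  assert (eps * sB * Rabs (x ^ 4 - x' ^ 4) <= eps * sB * (4 * (a + b) ^ 3 * Rabs (x - x')))
    by (apply Rmult_le_compat_l; [apply Rmult_le_pos |]; lra).
  assert (q * Rabs (coalbedo Tm Tp bm bp y - coalbedo Tm Tp bm bp y')
          <= q * (coalbedo_slope Tm Tp bm bp * Rabs (y - y')))
    by (apply Rmult_le_compat_l; lra).
  assert (0 <= sB * (a + b) ^ 3 * Rabs (x - x')) by (repeat apply Rmult_le_pos; lra).
  assert (0 <= eps * sB * (a + b) ^ 3 * Rabs (y - y')) by (repeat apply Rmult_le_pos; lra).
  assert (0 <= q * coalbedo_slope Tm Tp bm bp * Rabs (x - x'))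
    by (apply Rmult_le_pos; [apply Rmult_le_pos |]; lra).
  rewrite (Rabs_pos_eq eps), (Rabs_pos_eq q) by lra.
  nra.
Qed.

Lemma fa_antitone eps sB x y x' y' : 0 <= eps * sB -> 0 <= x <= x' -> 0 <= y' <= y ->
  fa eps sB x' y' <= fa eps sB x y.
Proof.
  intros He Hx Hy. unfold fa.
  assert (x ^ 4 <= x' ^ 4) by (apply pow_incr; lra).
  assert (y' ^ 4 <= y ^ 4) by (apply pow_incr; lra).
  apply Rmult_le_compat_l; lra.
Qed.

Lemma fs_sub_ge_of_u eps sB q Tm Tp bm bp x x' y ulow :
  0 <= eps * sB -> 0 <= ulow <= x' -> x' <= x ->
  eps * sB * ulow ^ 3 * (x - x') <= fs eps sB q Tm Tp bm bp x y - fs eps sB q Tm Tp bm bp x' y.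
Proof.
  intros He Hx Hxx. unfold fs.
  replace (- sB * y ^ 4 + eps * sB * x ^ 4 + q * coalbedo Tm Tp bm bp y -
           (- sB * y ^ 4 + eps * sB * x' ^ 4 + q * coalbedo Tm Tp bm bp y))
    with (eps * sB * (x ^ 4 - x' ^ 4)) by ring.
  pose proof (pow4_sub_ge x x' ltac:(lra)).
  assert (ulow ^ 3 <= x' ^ 3) by (apply pow_incr; lra).
  assert (ulow ^ 3 * (x - x') <= x' ^ 3 * (x - x')) by (apply Rmult_le_compat_r; lra).
  rewrite Rmult_assoc. apply Rmult_le_compat_l; lra.
Qed.

Lemma clamped_planar_flow_exists g1 g2 k1 k2 umax vmax a0 s0 :
  0 <= umax -> 0 <= vmax -> 0 <= k1 -> 0 <= k2 ->
  lipschitz_on_box umax vmax k1 g1 -> lipschitz_on_box umax vmax k2 g2 ->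
  exists u v : R -> R, u 0 = a0 /\ v 0 = s0 /\ continuity u /\ continuity v /\
    forall t, 0 <= u t <= umax -> 0 <= v t <= vmax ->
      derivable_pt_lim u t (g1 (u t) (v t)) /\ derivable_pt_lim v t (g2 (u t) (v t)).
Proof.
  intros hu hv hk1 hk2 H1 H2.
  set (M := Rabs (g1 0 0) + k1 * (umax + vmax) + (Rabs (g2 0 0) + k2 * (umax + vmax))).
  assert (Hlip : forall k, 0 <= k <= k1 + k2 -> forall x y x' y',
            k * (Rabs (x - x') + Rabs (y - y')) <= (k1 + k2 + 1) * (Rabs (x - x') + Rabs (y - y'))).
  { intros k Hk x y x' y'. pose proof (Rabs_pos (x - x')). pose proof (Rabs_pos (y - y')).
    apply Rmult_le_compat_r; lra. }
  destruct (planar_ode_global_existence (clamped umax vmax g1) (clamped umax vmax g2) a0 s0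
              M (k1 + k2 + 1)) as [u [v [Hu0 [Hv0 Huv]]]].
  - intros x y. pose proof (clamped_bounded _ _ _ _ hu hv hk1 H1 x y).
    pose proof (Rabs_pos (g2 0 0)). unfold M. nra.
  - intros x y. pose proof (clamped_bounded _ _ _ _ hu hv hk2 H2 x y).
    pose proof (Rabs_pos (g1 0 0)). unfold M. nra.
  - intros x y x' y'. eapply Rle_trans; [apply (clamped_lipschitz _ _ _ _ hu hv hk1 H1) |].
    apply Hlip; lra.
  - intros x y x' y'. eapply Rle_trans; [apply (clamped_lipschitz _ _ _ _ hu hv hk2 H2) |].
    apply Hlip; lra.
  - lra.
  - exists u, v. do 2 (split; [assumption |]). split; [| split].
    + intros t. apply derivable_continuous_pt. exists (clamped umax vmax g1 (u t) (v t)).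
      apply Huv.
    + intros t. apply derivable_continuous_pt. exists (clamped umax vmax g2 (u t) (v t)).
      apply Huv.
    + intros t Hut Hvt. destruct (Huv t) as [Hdu Hdv].
      unfold clamped in Hdu, Hdv. rewrite !clamp_id in Hdu, Hdv by lra.
      split; assumption.
Qed.

Lemma truncated_flow_exists eps sB q Tm Tp bm bp ga gs umax vmax a0 s0 :
  0 <= eps -> 0 < sB -> 0 < q -> 0 < ga -> 0 < gs -> Tm < Tp -> bm < bp ->
  0 <= umax -> 0 <= vmax ->
  exists u v : R -> R, u 0 = a0 /\ v 0 = s0 /\ continuity u /\ continuity v /\
    forall t, 0 <= u t <= umax -> 0 <= v t <= vmax ->
      derivable_pt_lim u t (- fa eps sB (u t) (v t) / ga) /\
      derivable_pt_lim v t (- fs eps sB q Tm Tp bm bp (u t) (v t) / gs).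
Proof.
  intros he hs hq hga hgs hT hb hu hv.
  pose proof (coalbedo_slope_pos Tm Tp bm bp hT hb).
  assert (0 <= (umax + vmax) ^ 3) by (apply pow_le; lra).
  destruct (clamped_planar_flow_exists (fun x y => - / ga * fa eps sB x y)
              (fun x y => - / gs * fs eps sB q Tm Tp bm bp x y)
              (Rabs (- / ga) * (8 * (eps * sB) * (umax + vmax) ^ 3))
              (Rabs (- / gs) * (4 * (1 + eps) * sB * (umax + vmax) ^ 3
                                + q * coalbedo_slope Tm Tp bm bp)) umax vmax a0 s0)
    as [u [v [Hu0 [Hv0 [Hcu [Hcv Hd]]]]]]; auto.
  - apply Rmult_le_pos; [apply Rabs_pos |]. repeat apply Rmult_le_pos; lra.
  - apply Rmult_le_pos; [apply Rabs_pos |].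
    apply Rplus_le_le_0_compat; [repeat apply Rmult_le_pos | apply Rmult_le_pos]; lra.
  - apply lipschitz_on_box_scal, fa_lipschitz_on_box; lra.
  - apply lipschitz_on_box_scal, fs_lipschitz_on_box; lra.
  - exists u, v. do 4 (split; [assumption |]).
    intros t Hut Hvt. destruct (Hd t Hut Hvt) as [Hdu Hdv]. unfold Rdiv.
    rewrite <- !Ropp_mult_distr_l, Ropp_mult_distr_r, (Rmult_comm _ (- / ga)),
      Ropp_mult_distr_r, (Rmult_comm _ (- / gs)).
    split; assumption.
Qed.

(** * The reversed flow inside the box *)

Section ReversedFlow.
Variables (eps sB q Tm Tp bm bp ga gs umax vmax U1 : R) (u v : R -> R).
Hypothesis hga : 0 < ga.
Hypothesis hgs : 0 < gs.
Hypothesis hsB : 0 < sB.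
Hypothesis hq : 0 < q.
Hypothesis heps : 0 < eps.
Hypothesis hT : Tm < Tp.
Hypothesis hb : 0 < bm < bp.
Hypothesis hvmax : 0 < vmax.
Hypothesis hU1 : 0 < U1.
Hypothesis hU1v : vmax ^ 4 <= eps * U1 ^ 4.
Hypothesis humax :
  U1 + (2 * sB * vmax ^ 4 * (gs * vmax / (q * bm)) + 2 * gs * vmax) / ga < umax.
Hypothesis hcu : continuity u.
Hypothesis hcv : continuity v.

Let Fu t := - fa eps sB (u t) (v t).
Let Fv t := fs eps sB q Tm Tp bm bp (u t) (v t).
Let in_box t := 0 <= u t <= umax /\ 0 <= v t <= vmax.
Let in_Q4_box t := 0 < u t < umax /\ 0 < v t < vmax /\ 0 < Fv t /\ 0 < Fu t.

Hypothesis hdu : forall t, in_box t -> derivable_pt_lim u t (Fu t / ga).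
Hypothesis hdv : forall t, in_box t -> derivable_pt_lim v t (- Fv t / gs).

Lemma U1_lt_umax : U1 < umax.
Proof.
  enough (0 <= (2 * sB * vmax ^ 4 * (gs * vmax / (q * bm)) + 2 * gs * vmax) / ga) by lra.
  assert (0 <= vmax ^ 4) by (apply pow_le; lra).
  assert (0 <= gs * vmax / (q * bm)) by (apply Rdiv_le_0_compat; nra).
  assert (0 <= 2 * sB * vmax ^ 4 * (gs * vmax / (q * bm)))
    by (apply Rmult_le_pos; [apply Rmult_le_pos |]; lra).
  apply Rdiv_le_0_compat; nra.
Qed.

Lemma Fu_continuity t : continuity_pt Fu t.
Proof.
  unfold Fu, fa.
  apply (continuity_pt_opp (fun s => eps * sB * (v s ^ 4 - 2 * u s ^ 4))).
  apply (continuity_pt_scal (fun s => v s ^ 4 - 2 * u s ^ 4)).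
  apply (continuity_pt_minus (fun s => v s ^ 4) (fun s => 2 * u s ^ 4)).
  - apply continuity_pt_pow_comp, hcv.
  - apply (continuity_pt_scal (fun s => u s ^ 4)), continuity_pt_pow_comp, hcu.
Qed.

Lemma Fv_continuity t : continuity_pt Fv t.
Proof.
  unfold Fv, fs.
  apply (continuity_pt_plus (fun s => - sB * v s ^ 4 + eps * sB * u s ^ 4)
                            (fun s => q * coalbedo Tm Tp bm bp (v s))).
  - apply (continuity_pt_plus (fun s => - sB * v s ^ 4) (fun s => eps * sB * u s ^ 4)).
    + apply (continuity_pt_scal (fun s => v s ^ 4)), continuity_pt_pow_comp, hcv.
    + apply (continuity_pt_scal (fun s => u s ^ 4)), continuity_pt_pow_comp, hcu.
  - apply (continuity_pt_scal (fun s => coalbedo Tm Tp bm bp (v s))).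
    apply (continuity_pt_comp v (coalbedo Tm Tp bm bp)); [apply hcv |].
    apply coalbedo_continuity; lra.
Qed.

Lemma Fu_derivative t : in_box t ->
  derivable_pt_lim Fu t (eps * sB * (8 * u t ^ 3 * (Fu t / ga) + 4 * v t ^ 3 * (Fv t / gs))).
Proof.
  intros Hin.
  assert (Hd : derivable_pt_lim (fun s => - (eps * sB * (v s ^ 4 - 2 * u s ^ 4))) t
                 (- (eps * sB * (INR 4 * v t ^ 3 * (- Fv t / gs)
                                 - 2 * (INR 4 * u t ^ 3 * (Fu t / ga)))))).
  { apply (derivable_pt_lim_opp (fun s => eps * sB * (v s ^ 4 - 2 * u s ^ 4))).
    apply (derivable_pt_lim_scal (fun s => v s ^ 4 - 2 * u s ^ 4)).
    apply (derivable_pt_lim_minus (fun s => v s ^ 4) (fun s => 2 * u s ^ 4)).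
    - exact (derivable_pt_lim_pow_comp v 4 t _ (hdv t Hin)).
    - apply (derivable_pt_lim_scal (fun s => u s ^ 4)).
      exact (derivable_pt_lim_pow_comp u 4 t _ (hdu t Hin)). }
  replace (eps * sB * (8 * u t ^ 3 * (Fu t / ga) + 4 * v t ^ 3 * (Fv t / gs)))
    with (- (eps * sB * (INR 4 * v t ^ 3 * (- Fv t / gs)
                         - 2 * (INR 4 * u t ^ 3 * (Fu t / ga)))))
    by (simpl INR; field; lra).
  exact Hd.
Qed.

Lemma in_Q4_box_locally t : in_Q4_box t -> locally t in_Q4_box.
Proof.
  intros [[Hu1 Hu2] [[Hv1 Hv2] [HFv HFu]]].
  assert (Hc : forall c, continuity_pt (fun _ => c) t)
    by (intros c; apply continuity_pt_const; intros ? ?; reflexivity).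
  repeat apply filter_and; apply locally_lt_of_continuity_pt;
    auto using Fu_continuity, Fv_continuity.
Qed.

Lemma in_box_of_in_Q4_box t : in_Q4_box t -> in_box t.
Proof. intros [? [? _]]. split; lra. Qed.

Lemma monotone_in_Q4_box t1 t : (forall s, t1 <= s <= t -> in_Q4_box s) ->
  forall s, t1 <= s <= t -> u t1 <= u s /\ v s <= v t1 /\ Fu t1 <= Fu s.
Proof.
  intros Hg s Hs.
  assert (Hu : 0 * (s - t1) <= u s - u t1).
  { apply (diff_ge_of_derive_ge u (fun x => Fu x / ga)); [lra | |].
    - intros x Hx. apply hdu, in_box_of_in_Q4_box, Hg. lra.
    - intros x Hx. destruct (Hg x ltac:(lra)) as [_ [_ [_ HFu]]].
      apply Rlt_le, Rdiv_lt_0_compat; lra. }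
  assert (Hv : v s - v t1 <= 0 * (s - t1)).
  { apply (diff_le_of_derive_le v (fun x => - Fv x / gs)); [lra | |].
    - intros x Hx. apply hdv, in_box_of_in_Q4_box, Hg. lra.
    - intros x Hx. destruct (Hg x ltac:(lra)) as [_ [_ [HFv _]]].
      unfold Rdiv. rewrite <- Ropp_mult_distr_l.
      apply Ropp_le_cancel. rewrite Ropp_involutive, Ropp_0.
      apply Rlt_le, Rmult_lt_0_compat; [lra | apply Rinv_0_lt_compat; lra]. }
  destruct (Hg t1 ltac:(lra)) as [[? _] [[? _] _]].
  destruct (Hg s Hs) as [_ [[? _] _]].
  split; [lra | split; [lra |]].
  apply Ropp_le_contravar, fa_antitone; [apply Rmult_le_pos | |]; lra.
Qed.

Lemma monotone_up_to_exit t1 sg : t1 < sg -> (forall s, t1 <= s < sg -> in_Q4_box s) ->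
  forall s, t1 <= s <= sg -> in_box s /\ u t1 <= u s /\ v s <= v t1 /\ Fu t1 <= Fu s.
Proof.
  intros Hlt Hg.
  assert (Hmono : forall s, t1 <= s < sg -> u t1 <= u s /\ v s <= v t1 /\ Fu t1 <= Fu s)
    by (intros s Hs; apply (monotone_in_Q4_box t1 s); [intros; apply Hg |]; lra).
  assert (Hu : u t1 <= u sg)
    by (apply (ge_of_continuity_pt_left u t1 sg); [apply hcu | lra | apply Hmono]).
  assert (Hv : v sg <= v t1)
    by (apply (le_of_continuity_pt_left v t1 sg); [apply hcv | lra | apply Hmono]).
  assert (Hv0 : 0 <= v sg).
  { apply (ge_of_continuity_pt_left v t1 sg); [apply hcv | lra |].
    intros s Hs. destruct (Hg s Hs) as [_ [[? _] _]]. lra. }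
  assert (Hum : u sg <= umax).
  { apply (le_of_continuity_pt_left u t1 sg); [apply hcu | lra |].
    intros s Hs. destruct (Hg s Hs) as [[_ ?] _]. lra. }
  destruct (Hg t1 ltac:(lra)) as [[? _] [[_ ?] _]].
  intros s Hs. destruct (Rle_lt_or_eq_dec s sg (proj2 Hs)) as [Hlt' | ->].
  - split; [apply in_box_of_in_Q4_box, Hg; lra | apply Hmono; lra].
  - split; [split; lra |]. split; [lra | split; [lra |]].
    apply Ropp_le_contravar, fa_antitone; [apply Rmult_le_pos | |]; lra.
Qed.

Lemma Fv_ge_of_u_ge t : in_box t -> U1 <= u t -> q * bm <= Fv t.
Proof.
  intros [Hu Hv] HU. unfold Fv, fs.
  assert (v t ^ 4 <= vmax ^ 4) by (apply pow_incr; lra).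
  assert (U1 ^ 4 <= u t ^ 4) by (apply pow_incr; lra).
  pose proof (coalbedo_bounds Tm Tp bm bp hT ltac:(lra) (v t)).
  assert (eps * U1 ^ 4 <= eps * u t ^ 4) by (apply Rmult_le_compat_l; lra).
  assert (sB * v t ^ 4 <= sB * (eps * u t ^ 4)) by (apply Rmult_le_compat_l; lra).
  assert (q * bm <= q * coalbedo Tm Tp bm bp (v t)) by (apply Rmult_le_compat_l; lra).
  lra.
Qed.

Lemma time_to_axis_le t2 sg : t2 <= sg ->
  (forall s, t2 <= s <= sg -> in_box s /\ q * bm <= Fv s) ->
  sg - t2 <= gs * vmax / (q * bm).
Proof.
  intros Hle Hall.
  assert (Hdrop : v sg - v t2 <= - (q * bm / gs) * (sg - t2)).
  { apply (diff_le_of_derive_le v (fun x => - Fv x / gs)); [lra | |].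
    - intros x Hx. apply hdv, Hall, Hx.
    - intros x Hx. destruct (Hall x Hx) as [_ HFv].
      unfold Rdiv. apply Ropp_le_cancel. rewrite !Ropp_mult_distr_l, !Ropp_involutive.
      apply Rmult_le_compat_r; [left; apply Rinv_0_lt_compat |]; lra. }
  destruct (Hall t2 ltac:(lra)) as [[_ Hv2] _]. destruct (Hall sg ltac:(lra)) as [[_ Hvs] _].
  apply (Rmult_le_reg_l (q * bm / gs)); [apply Rdiv_lt_0_compat; nra |].
  replace (q * bm / gs * (gs * vmax / (q * bm))) with vmax by (field; lra).
  lra.
Qed.

(* The quartic terms in [u] cancel in [ga u' + 2 gs v']. *)
Lemma weighted_sum_growth a b : a <= b -> (forall s, a <= s <= b -> in_box s) ->
  ga * u b + 2 * gs * v b - (ga * u a + 2 * gs * v a) <= 2 * sB * vmax ^ 4 * (b - a).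
Proof.
  intros Hab Hall.
  apply (diff_le_of_derive_le (fun x => ga * u x + 2 * gs * v x)
           (fun x => ga * (Fu x / ga) + 2 * gs * (- Fv x / gs))); [lra | |].
  - intros x Hx.
    apply (derivable_pt_lim_plus (fun x => ga * u x) (fun x => 2 * gs * v x)).
    + apply (derivable_pt_lim_scal u ga), hdu, Hall, Hx.
    + apply (derivable_pt_lim_scal v (2 * gs)), hdv, Hall, Hx.
  - intros x Hx. destruct (Hall x Hx) as [_ Hv].
    replace (ga * (Fu x / ga) + 2 * gs * (- Fv x / gs))
      with ((2 - eps) * sB * v x ^ 4 - 2 * q * coalbedo Tm Tp bm bp (v x))
      by (unfold Fu, Fv, fa, fs; field; lra).
    assert (v x ^ 4 <= vmax ^ 4) by (apply pow_incr; lra).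
    assert (0 <= v x ^ 4) by (apply pow_le; lra).
    pose proof (coalbedo_bounds Tm Tp bm bp hT ltac:(lra) (v x)).
    assert (0 <= eps * (sB * v x ^ 4)) by (apply Rmult_le_pos; [| apply Rmult_le_pos]; lra).
    assert (sB * v x ^ 4 <= sB * vmax ^ 4) by (apply Rmult_le_compat_l; lra).
    assert (0 <= q * coalbedo Tm Tp bm bp (v x)) by (apply Rmult_le_pos; lra).
    nra.
Qed.

(* Once [u >= U1], [v] reaches [0] within time [gs vmax / (q bm)], while [ga u + 2 gs v]
   grows at rate at most [2 sB vmax^4]; this is where the bound [humax] comes from. *)
Lemma u_lt_umax t1 sg : t1 <= sg ->
  (forall s, t1 <= s <= sg -> in_box s /\ 0 <= Fu s) -> u t1 < U1 -> u sg < umax.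
Proof.
  intros Hle Hall Hu1. pose proof U1_lt_umax.
  destruct (Rlt_le_dec (u sg) U1) as [| HU]; [lra |].
  destruct (IVT_cor (fun x => u x - U1) t1 sg) as [t2 [Ht2 Hut2]];
    [intros x; apply continuity_pt_minus; [apply hcu | apply continuity_pt_const; now intros ? ?]
    | lra | simpl; apply Rmult_le_0_r; lra |].
  simpl in Hut2.
  assert (HuU : forall s, t2 <= s <= sg -> U1 <= u s).
  { intros s Hs.
    enough (0 * (s - t2) <= u s - u t2) by lra.
    apply (diff_ge_of_derive_ge u (fun x => Fu x / ga)); [lra | |].
    - intros x Hx. apply hdu, Hall. lra.
    - intros x Hx. apply Rdiv_le_0_compat; [apply Hall |]; lra. }
  assert (HD : sg - t2 <= gs * vmax / (q * bm)).
  { apply time_to_axis_le; [lra |]. intros s Hs.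
    destruct (Hall s ltac:(lra)) as [Hin _]. split; [exact Hin |].
    apply Fv_ge_of_u_ge; [exact Hin | apply HuU, Hs]. }
  pose proof (weighted_sum_growth t2 sg ltac:(lra) (fun s Hs => proj1 (Hall s ltac:(lra))))
    as HW.
  destruct (Hall t2 ltac:(lra)) as [[_ Hv2] _]. destruct (Hall sg ltac:(lra)) as [[_ Hvs] _].
  set (D := gs * vmax / (q * bm)) in *.
  assert (0 <= vmax ^ 4) by (apply pow_le; lra).
  assert (2 * sB * vmax ^ 4 * (sg - t2) <= 2 * sB * vmax ^ 4 * D)
    by (apply Rmult_le_compat_l; nra).
  assert (u sg - U1 <= (2 * sB * vmax ^ 4 * D + 2 * gs * vmax) / ga).
  { apply (Rmult_le_reg_l ga); [lra |].
    replace (ga * ((2 * sB * vmax ^ 4 * D + 2 * gs * vmax) / ga))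
      with (2 * sB * vmax ^ 4 * D + 2 * gs * vmax) by (field; lra).
    nra. }
  lra.
Qed.

Lemma v_displacement_le al be eta : al <= be ->
  (forall s, al <= s <= be -> in_box s /\ Rabs (Fv s) <= eta) ->
  Rabs (v be - v al) <= eta / gs * (be - al).
Proof.
  intros Hab Hall.
  assert (Hd : forall x, al <= x <= be -> derivable_pt_lim v x (- Fv x / gs))
    by (intros x Hx; apply hdv, Hall, Hx).
  assert (Hrate : forall x, al <= x <= be -> - (eta / gs) <= - Fv x / gs <= eta / gs).
  { intros x Hx. destruct (Hall x Hx) as [_ HFv]. apply Rabs_le_between in HFv.
    unfold Rdiv. assert (0 < / gs) by (apply Rinv_0_lt_compat; lra).
    split; nra. }
  apply Rabs_le. split.
  - enough (- (eta / gs) * (be - al) <= v be - v al) by lra.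
    apply (diff_ge_of_derive_ge v (fun x => - Fv x / gs)); [lra | exact Hd |].
    intros x Hx. apply Hrate, Hx.
  - apply (diff_le_of_derive_le v (fun x => - Fv x / gs)); [lra | exact Hd |].
    intros x Hx. apply Hrate, Hx.
Qed.

(* Where [Fv] is small, [v] is nearly stationary, so [Fv] increases with [u]. *)
Lemma Fv_increasing_where_small c ulow : 0 < c -> 0 < ulow ->
  exists eta, 0 < eta /\ forall al be, al < be ->
    (forall s, al <= s <= be -> in_box s /\ c <= Fu s / ga) -> ulow <= u al ->
    (forall s, al <= s <= be -> Rabs (Fv s) <= eta) -> Fv al < Fv be.
Proof.
  intros Hc Hul.
  set (kv := 4 * (1 + eps) * sB * (umax + vmax) ^ 3 + q * coalbedo_slope Tm Tp bm bp).
  assert (Hum : 0 < umax) by (pose proof U1_lt_umax; lra).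
  assert (Hkv : 0 < kv).
  { unfold kv. pose proof (coalbedo_slope_pos Tm Tp bm bp hT ltac:(lra)).
    assert (0 <= 4 * (1 + eps) * sB * (umax + vmax) ^ 3)
      by (repeat apply Rmult_le_pos; try apply pow_le; lra).
    assert (0 < q * coalbedo_slope Tm Tp bm bp) by (apply Rmult_lt_0_compat; lra).
    lra. }
  set (m := eps * sB * ulow ^ 3 * c).
  assert (Hm : 0 < m) by (unfold m; repeat apply Rmult_lt_0_compat; try apply pow_lt; lra).
  exists (m * gs / (2 * kv)). split; [apply Rdiv_lt_0_compat; nra |].
  intros al be Hab Hin Hual Hsmall.
  assert (Hu : c * (be - al) <= u be - u al).
  { apply (diff_ge_of_derive_ge u (fun x => Fu x / ga)); [lra | |].
    - intros x Hx. apply hdu, Hin, Hx.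
    - intros x Hx. apply Hin, Hx. }
  assert (Hv : kv * Rabs (v be - v al) <= m / 2 * (be - al)).
  { pose proof (v_displacement_le al be (m * gs / (2 * kv)) ltac:(lra)
                  (fun s Hs => conj (proj1 (Hin s Hs)) (Hsmall s Hs))) as Hv.
    apply Rmult_le_compat_l with (r := kv) in Hv; [| lra].
    replace (kv * (m * gs / (2 * kv) / gs * (be - al))) with (m / 2 * (be - al)) in Hv
      by (field; lra).
    exact Hv. }
  destruct (Hin al ltac:(lra)) as [[Hual' Hval] _].
  destruct (Hin be ltac:(lra)) as [[Hube Hvbe] _].
  assert (Hlip : Rabs (fs eps sB q Tm Tp bm bp (u al) (v be)
                       - fs eps sB q Tm Tp bm bp (u al) (v al)) <= kv * Rabs (v be - v al)).
  { pose proof (fs_lipschitz_on_box eps sB q Tm Tp bm bp umax vmax ltac:(lra) ltac:(lra)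
                  ltac:(lra) hT ltac:(lra) ltac:(lra) ltac:(lra)
                  (u al) (v be) (u al) (v al) ltac:(lra) ltac:(lra) ltac:(lra) ltac:(lra)) as H.
    rewrite Rminus_diag, Rabs_R0, Rplus_0_l in H. exact H. }
  pose proof (fs_sub_ge_of_u eps sB q Tm Tp bm bp (u be) (u al) (v be) ulow
                ltac:(apply Rmult_le_pos; lra) ltac:(lra) ltac:(nra)) as Hgain.
  assert (m * (be - al) <= eps * sB * ulow ^ 3 * (u be - u al)).
  { unfold m. rewrite Rmult_assoc. apply Rmult_le_compat_l; [| lra].
    repeat apply Rmult_le_pos; try apply pow_le; lra. }
  apply Rabs_le_between' in Hlip. unfold Fv. nra.
Qed.

Lemma Fv_positive_at_exit t1 sg c : t1 < sg -> 0 < c -> 0 < u t1 ->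
  (forall s, t1 <= s <= sg -> in_box s /\ c <= Fu s / ga /\ u t1 <= u s) ->
  (forall s, t1 <= s < sg -> 0 < Fv s) -> 0 < Fv sg.
Proof.
  intros Hlt Hc Hu1 Hall Hpos.
  assert (HFv : 0 <= Fv sg)
    by (apply (ge_of_continuity_pt_left Fv t1 sg); [apply Fv_continuity | lra |];
        intros s Hs; apply Rlt_le, Hpos, Hs).
  destruct (Rle_lt_or_eq_dec 0 (Fv sg) HFv) as [| HFv0]; [assumption | exfalso].
  destruct (Fv_increasing_where_small c (u t1) Hc Hu1) as [eta [Heta Hcross]].
  destruct (continuity_pt_near Fv sg eta (Fv_continuity sg) Heta) as [d [Hd Hnear]].
  set (al := Rmax t1 (sg - d / 2)).
  assert (Hal : t1 <= al < sg) by (unfold al; split; [apply Rmax_l | apply Rmax_lub_lt]; lra).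
  assert (Fv al < Fv sg).
  { apply Hcross; [lra | | apply Hall; lra |].
    - intros s Hs. destruct (Hall s ltac:(lra)) as [? [? _]]. split; assumption.
    - intros s Hs. left. replace (Fv s) with (Fv s - Fv sg) by (rewrite <- HFv0; ring).
      apply Hnear. rewrite Rabs_left1 by lra.
      unfold al in Hs. pose proof (Rmax_r t1 (sg - d / 2)). lra. }
  pose proof (Hpos al Hal). lra.
Qed.

Lemma reaches_axis_from_Q4_box t1 : in_Q4_box t1 -> u t1 < U1 ->
  exists sg, t1 < sg /\ v sg = 0 /\ 0 < u sg /\ forall s, t1 <= s <= sg -> in_box s.
Proof.
  intros Hg1 HU. pose proof Hg1 as [[Hu1 _] [[_ Hv1] [_ HFu1]]].
  set (c1 := Fu t1 / ga).
  assert (Hc1 : 0 < c1) by (apply Rdiv_lt_0_compat; lra).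
  destruct (exit_time in_Q4_box t1 (t1 + umax / c1) Hg1 in_Q4_box_locally)
    as [sg [Hsg [Hbefore Hexit]]].
  { intros t Ht Hgt.
    assert (Hgrow : c1 * (t - t1) <= u t - u t1).
    { apply (diff_ge_of_derive_ge u (fun x => Fu x / ga)); [lra | |].
      - intros x Hx. apply hdu, in_box_of_in_Q4_box, Hgt, Hx.
      - intros x Hx. apply Rmult_le_compat_r; [left; apply Rinv_0_lt_compat; lra |].
        apply (monotone_in_Q4_box t1 t Hgt x Hx). }
    destruct (Hgt t ltac:(lra)) as [[_ Hut] _].
    enough (t - t1 <= umax / c1) by lra.
    apply (Rmult_le_reg_l c1); [exact Hc1 |].
    replace (c1 * (umax / c1)) with umax by (field; lra). lra. }
  pose proof (monotone_up_to_exit t1 sg Hsg Hbefore) as Hall.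
  assert (Hum : u sg < umax).
  { apply (u_lt_umax t1 sg); [lra | | exact HU].
    intros s Hs. destruct (Hall s Hs) as [? [_ [_ ?]]]. split; [assumption | lra]. }
  assert (HFv : 0 < Fv sg).
  { apply (Fv_positive_at_exit t1 sg c1); auto; [| intros s Hs; apply Hbefore, Hs].
    intros s Hs. destruct (Hall s Hs) as [? [? [_ ?]]]. split; [assumption | split; [| assumption]].
    apply Rmult_le_compat_r; [left; apply Rinv_0_lt_compat |]; lra. }
  destruct (Hall sg ltac:(lra)) as [[[Hu0 _] [Hv0 _]] [? [? ?]]].
  exists sg. split; [exact Hsg |]. split; [| split; [lra | intros s Hs; apply Hall, Hs]].
  destruct (Rle_lt_or_eq_dec 0 (v sg) Hv0) as [Hvpos | <-]; [exfalso | reflexivity].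
  apply Hexit. unfold in_Q4_box. repeat split; lra.
Qed.

Lemma Fu_pos_right t0 : in_box t0 -> 0 < v t0 -> 0 <= Fu t0 -> (Fu t0 = 0 -> 0 < Fv t0) ->
  exists d, 0 < d /\ forall s, t0 < s < t0 + d -> 0 < Fu s.
Proof.
  intros Hin Hv HFu HFv.
  destruct (Rle_lt_or_eq_dec 0 (Fu t0) HFu) as [Hpos | Hzero].
  - exact (pos_right_of_continuity_pt Fu t0 (Fu_continuity t0) Hpos).
  - destruct (increases_right_of_derive_pos _ _ _ (Fu_derivative t0 Hin)) as [d [Hd Hinc]].
    + rewrite <- Hzero. pose proof (HFv (eq_sym Hzero)).
      assert (0 < v t0 ^ 3) by (apply pow_lt; lra).
      assert (0 < Fv t0 / gs) by (apply Rdiv_lt_0_compat; lra).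
      unfold Rdiv at 1. rewrite Rmult_0_l, Rmult_0_r, Rplus_0_l.
      apply Rmult_lt_0_compat; [apply Rmult_lt_0_compat; lra |].
      apply Rmult_lt_0_compat; [apply Rmult_lt_0_compat |]; lra.
    + exists d. split; [exact Hd |]. intros s Hs. specialize (Hinc s Hs). lra.
Qed.

Lemma Fv_pos_right t0 : locally t0 in_box -> 0 < u t0 -> 0 <= Fv t0 ->
  (Fv t0 = 0 -> 0 < Fu t0) -> exists d, 0 < d /\ forall s, t0 < s < t0 + d -> 0 < Fv s.
Proof.
  intros [e Hin] Hu HFv HFu.
  destruct (Rle_lt_or_eq_dec 0 (Fv t0) HFv) as [Hpos | Hzero].
  { exact (pos_right_of_continuity_pt Fv t0 (Fv_continuity t0) Hpos). }
  pose proof (HFu (eq_sym Hzero)) as HFu0.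
  set (c := Fu t0 / (2 * ga)).
  destruct (Fv_increasing_where_small c (u t0)) as [eta [Heta Hcross]];
    [apply Rdiv_lt_0_compat; lra | exact Hu |].
  destruct (continuity_pt_near Fu t0 (Fu t0 / 2) (Fu_continuity t0) ltac:(lra))
    as [d1 [Hd1 Hnear1]].
  destruct (continuity_pt_near Fv t0 eta (Fv_continuity t0) Heta) as [d2 [Hd2 Hnear2]].
  set (d := Rmin e (Rmin d1 d2)).
  assert (Hd : 0 < d) by (apply Rmin_pos; [apply cond_pos | apply Rmin_pos; lra]).
  assert (Hde : d <= e /\ d <= d1 /\ d <= d2).
  { unfold d. pose proof (Rmin_l e (Rmin d1 d2)). pose proof (Rmin_r e (Rmin d1 d2)).
    pose proof (Rmin_l d1 d2). pose proof (Rmin_r d1 d2). lra. }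
  exists d. split; [exact Hd |]. intros s Hs.
  assert (Hclose : forall x, t0 <= x <= s -> Rabs (x - t0) < d)
    by (intros x Hx; rewrite Rabs_pos_eq; lra).
  rewrite Hzero. apply Hcross; [lra | | lra |].
  - intros x Hx. pose proof (Hclose x Hx).
    split; [apply Hin; change (Rabs (x - t0) < e); lra |].
    pose proof (proj1 (Rabs_lt_between' _ _ _) (Hnear1 x ltac:(lra))).
    unfold c. apply Rmult_le_reg_r with (2 * ga); [lra |].
    replace (Fu t0 / (2 * ga) * (2 * ga)) with (Fu t0) by (field; lra).
    replace (Fu x / ga * (2 * ga)) with (2 * Fu x) by (field; lra). lra.
  - intros x Hx. pose proof (Hclose x Hx). left.
    replace (Fv x) with (Fv x - Fv t0) by (rewrite <- Hzero; ring). apply Hnear2. lra.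
Qed.

Lemma enters_Q4_box : 0 < u 0 < U1 -> 0 < v 0 < vmax ->
  0 <= Fv 0 -> 0 <= Fu 0 -> ~ (Fv 0 = 0 /\ Fu 0 = 0) ->
  exists t1, 0 <= t1 /\ (forall s, 0 <= s <= t1 -> in_box s) /\ in_Q4_box t1 /\ u t1 < U1.
Proof.
  intros Hu Hv HFv HFu Hne. pose proof U1_lt_umax.
  assert (Hc : forall c, continuity_pt (fun _ => c) 0)
    by (intros c; apply continuity_pt_const; intros ? ?; reflexivity).
  assert (Hnear : locally 0 (fun s => (0 < u s /\ u s < U1) /\ (0 < v s /\ v s < vmax)))
    by (repeat apply filter_and; apply locally_lt_of_continuity_pt; auto; lra).
  destruct (Fu_pos_right 0) as [d1 [Hd1 H1]]; [split; lra | lra | exact HFu | |].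
  { intros H0. destruct (Rle_lt_or_eq_dec 0 (Fv 0) HFv); [assumption |].
    exfalso. apply Hne. split; auto. }
  destruct (Fv_pos_right 0) as [d2 [Hd2 H2]]; [| lra | exact HFv | |].
  { revert Hnear. apply filter_imp. intros s [[? ?] [? ?]]. split; split; lra. }
  { intros H0. destruct (Rle_lt_or_eq_dec 0 (Fu 0) HFu); [assumption |].
    exfalso. apply Hne. split; auto. }
  destruct Hnear as [e He].
  set (t1 := Rmin e (Rmin d1 d2) / 2).
  assert (Ht1 : 0 < t1 /\ t1 < e /\ t1 < d1 /\ t1 < d2).
  { unfold t1. pose proof (cond_pos e).
    pose proof (Rmin_l e (Rmin d1 d2)). pose proof (Rmin_r e (Rmin d1 d2)).
    pose proof (Rmin_l d1 d2). pose proof (Rmin_r d1 d2).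
    assert (0 < Rmin e (Rmin d1 d2)) by (apply Rmin_pos; [| apply Rmin_pos]; lra). lra. }
  assert (Hbox : forall s, 0 <= s <= t1 -> (0 < u s < U1) /\ (0 < v s < vmax)).
  { intros s Hs. apply He. change (Rabs (s - 0) < e). rewrite Rminus_0_r, Rabs_pos_eq; lra. }
  exists t1. split; [lra |]. split.
  - intros s Hs. destruct (Hbox s Hs). split; lra.
  - destruct (Hbox t1 ltac:(lra)). pose proof (H1 t1 ltac:(lra)). pose proof (H2 t1 ltac:(lra)).
    split; [unfold in_Q4_box; repeat split |]; lra.
Qed.

Lemma reaches_axis : 0 < u 0 < U1 -> 0 < v 0 < vmax ->
  0 <= Fv 0 -> 0 <= Fu 0 -> ~ (Fv 0 = 0 /\ Fu 0 = 0) ->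
  exists tau, 0 < tau /\ v tau = 0 /\ 0 < u tau /\ forall s, 0 <= s <= tau -> in_box s.
Proof.
  intros Hu Hv HFv HFu Hne.
  destruct (enters_Q4_box Hu Hv HFv HFu Hne) as [t1 [Ht1 [Hin1 [Hg HU]]]].
  destruct (reaches_axis_from_Q4_box t1 Hg HU) as [sg [Hsg [Hv0 [Hupos Hin2]]]].
  exists sg. split; [lra |]. split; [exact Hv0 |]. split; [exact Hupos |].
  intros s Hs. destruct (Rle_lt_dec s t1); [apply Hin1 | apply Hin2]; lra.
Qed.

End ReversedFlow.

(** * The boundary of [Q4] *)

Lemma nonneg_at_boundary_point (S : R -> R -> Prop) (g : R -> R -> R) k a0 s0 :
  in_boundary S a0 s0 -> 0 <= k ->
  (forall x y, S x y -> Rabs (x - a0) < 1 -> Rabs (y - s0) < 1 ->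
     0 < g x y /\ Rabs (g x y - g a0 s0) <= k * (Rabs (x - a0) + Rabs (y - s0))) ->
  0 <= g a0 s0.
Proof.
  intros Hbd Hk Hg. apply Rnot_lt_le. intros Hneg.
  set (e := Rmin 1 (- g a0 s0 / (2 * (k + 1)))).
  assert (He : 0 < e) by (apply Rmin_pos; [lra | apply Rdiv_lt_0_compat; lra]).
  assert (He1 : e <= 1) by apply Rmin_l.
  assert (He2 : e * (2 * (k + 1)) <= - g a0 s0).
  { apply Rmult_le_reg_r with (/ (2 * (k + 1))); [apply Rinv_0_lt_compat; lra |].
    rewrite Rmult_assoc, Rinv_r, Rmult_1_r by lra. apply Rmin_r. }
  destruct (Hbd e He) as [[x [y [Hx [Hy HS]]]] _].
  destruct (Hg x y HS ltac:(lra) ltac:(lra)) as [Hpos Hlip].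
  apply Rabs_le_between' in Hlip.
  assert (k * (Rabs (x - a0) + Rabs (y - s0)) <= k * (2 * e))
    by (apply Rmult_le_compat_l; lra).
  nra.
Qed.

Lemma Rpower_quarter_pow4 : Rpower 2 (1 / 4) ^ 4 = 2.
Proof.
  rewrite <- Rpower_pow by (unfold Rpower; apply exp_pos).
  rewrite Rpower_mult. replace (1 / 4 * INR 4) with 1 by (simpl; field).
  apply Rpower_1. lra.
Qed.

Lemma boundary_Q4_Fs_nonneg eps sB q Tm Tp bm bp a0 s0 :
  0 <= eps -> 0 <= sB -> 0 <= q -> Tm < Tp -> bm < bp -> 0 < a0 -> 0 < s0 ->
  in_boundary (inQ4 eps sB q Tm Tp bm bp) a0 s0 -> 0 <= Fs eps sB q Tm Tp bm bp a0 s0.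
Proof.
  intros he hs hq hT hb ha hs0 Hbd. rewrite Fs_eq_fs by lra.
  set (k := 4 * (1 + eps) * sB * (a0 + 1 + (s0 + 1)) ^ 3 + q * coalbedo_slope Tm Tp bm bp).
  pose proof (fs_lipschitz_on_box eps sB q Tm Tp bm bp (a0 + 1) (s0 + 1)
                he hs hq hT hb ltac:(lra) ltac:(lra)) as Hlip.
  apply (nonneg_at_boundary_point _ _ k _ _ Hbd).
  { unfold k. pose proof (coalbedo_slope_pos Tm Tp bm bp hT hb).
    assert (0 <= (a0 + 1 + (s0 + 1)) ^ 3) by (apply pow_le; lra).
    apply Rplus_le_le_0_compat; [repeat apply Rmult_le_pos | apply Rmult_le_pos]; lra. }
  intros x y [[Hx Hy] [_ Hpos]] Hxa Hys.
  apply Rabs_def2 in Hxa. apply Rabs_def2 in Hys.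
  split; [unfold fs; lra |]. apply Hlip; lra.
Qed.

Lemma boundary_Q4_Fa_nonpos eps sB q Tm Tp bm bp a0 s0 :
  0 <= eps * sB -> 0 < a0 -> 0 < s0 ->
  in_boundary (inQ4 eps sB q Tm Tp bm bp) a0 s0 -> Fa eps sB a0 s0 <= 0.
Proof.
  intros hes ha hs0 Hbd. rewrite Fa_eq_fa by lra.
  set (c := Rpower 2 (1 / 4)).
  assert (Hc : 0 < c) by (unfold c, Rpower; apply exp_pos).
  assert (Hs : 0 <= c * a0 - s0).
  { apply (nonneg_at_boundary_point _ (fun x y => c * x - y) (c + 1) _ _ Hbd); [lra |].
    intros x y [_ [Hlt _]] _ _. split; [fold c in Hlt; lra |].
    replace (c * x - y - (c * a0 - s0)) with (c * (x - a0) + - (y - s0)) by ring.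
    eapply Rle_trans; [apply Rabs_triang |].
    rewrite Rabs_mult, Rabs_Ropp, (Rabs_pos_eq c) by lra.
    pose proof (Rabs_pos (x - a0)). pose proof (Rabs_pos (y - s0)). nra. }
  assert (Hpow : s0 ^ 4 <= (c * a0) ^ 4) by (apply pow_incr; lra).
  rewrite Rpow_mult_distr in Hpow. unfold c in Hpow. rewrite Rpower_quarter_pow4 in Hpow.
  unfold fa. assert (0 <= 2 * a0 ^ 4 - s0 ^ 4) by lra. nra.
Qed.

(** * Backward solutions from the boundary of [Q4] *)

Lemma quartic_threshold_exists eps a0 vmax : 0 < eps -> 0 < vmax ->
  exists U1, a0 < U1 /\ 0 < U1 /\ vmax ^ 4 <= eps * U1 ^ 4.
Proof.
  intros heps Hvm.
  exists (Rmax a0 0 + 1 + vmax * (1 + / eps)).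
  assert (Hie : 0 < / eps) by (apply Rinv_0_lt_compat; lra).
  set (U1 := Rmax a0 0 + 1 + vmax * (1 + / eps)).
  pose proof (Rmax_l a0 0). pose proof (Rmax_r a0 0).
  assert (HU1 : vmax <= U1 /\ vmax <= eps * U1).
  { unfold U1. replace (eps * (Rmax a0 0 + 1 + vmax * (1 + / eps)))
      with (eps * (Rmax a0 0 + 1) + eps * vmax + vmax) by (field; lra).
    nra. }
  split; [unfold U1; nra | split; [lra |]].
  replace (vmax ^ 4) with (vmax * vmax ^ 3) by ring.
  replace (eps * U1 ^ 4) with (eps * U1 * U1 ^ 3) by ring.
  apply Rmult_le_compat; [lra | apply pow_le; lra | lra | apply pow_incr; lra].
Qed.

Lemma reversed_flow_reaches_axis eps sB q Tm Tp bm bp ga gs a0 s0 :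
  0 < ga -> 0 < gs -> 0 < sB -> 0 < q -> 0 < eps -> Tm < Tp -> 0 < bm < bp ->
  0 < a0 -> 0 < s0 ->
  0 <= Fs eps sB q Tm Tp bm bp a0 s0 -> Fa eps sB a0 s0 <= 0 ->
  ~ (Fa eps sB a0 s0 = 0 /\ Fs eps sB q Tm Tp bm bp a0 s0 = 0) ->
  exists (tau : R) (u v : R -> R), 0 < tau /\ u 0 = a0 /\ v 0 = s0 /\
    v tau = 0 /\ 0 < u tau /\
    forall t, 0 <= t <= tau ->
      derivable_pt_lim u t (- Fa eps sB (u t) (v t) / ga) /\
      derivable_pt_lim v t (- Fs eps sB q Tm Tp bm bp (u t) (v t) / gs).
Proof.
  intros hga hgs hsB hq heps hT hb ha hs HFs HFa Hne.
  rewrite Fa_eq_fa, Fs_eq_fs in * by lra.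
  set (vmax := s0 + 1).
  assert (Hvm : 0 < vmax) by (unfold vmax; lra).
  destruct (quartic_threshold_exists eps a0 vmax heps Hvm) as [U1 [HaU1 [HU1 HU1v]]].
  set (umax := U1 + (2 * sB * vmax ^ 4 * (gs * vmax / (q * bm)) + 2 * gs * vmax) / ga + 1).
  assert (Humax : U1 + (2 * sB * vmax ^ 4 * (gs * vmax / (q * bm)) + 2 * gs * vmax) / ga < umax)
    by (unfold umax; lra).
  pose proof (U1_lt_umax sB q bm bp ga gs umax vmax U1 hga hgs hsB hq hb Hvm Humax).
  destruct (truncated_flow_exists eps sB q Tm Tp bm bp ga gs umax vmax a0 s0)
    as [u [v [Hu0 [Hv0 [Hcu [Hcv Hd]]]]]]; try lra.
  assert (Hflow : forall t, 0 <= u t <= umax /\ 0 <= v t <= vmax ->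
            derivable_pt_lim u t (- fa eps sB (u t) (v t) / ga) /\
            derivable_pt_lim v t (- fs eps sB q Tm Tp bm bp (u t) (v t) / gs))
    by (intros t [Hut Hvt]; apply Hd; assumption).
  destruct (reaches_axis eps sB q Tm Tp bm bp ga gs umax vmax U1 u v hga hgs hsB hq heps hT hb
              Hvm HU1 HU1v Humax Hcu Hcv (fun t Ht => proj1 (Hflow t Ht))
              (fun t Ht => proj2 (Hflow t Ht)))
    as [tau [Htau [Hvtau [Hutau Hin]]]];
    rewrite ?Hu0, ?Hv0;
    [lra | unfold vmax; lra | exact HFs | lra | intros [H1 H2]; apply Hne; split; lra |].
  exists tau, u, v. do 5 (split; [assumption |]).
  intros t Ht. destruct (Hin t Ht) as [Hut Hvt]. destruct (Hflow t (conj Hut Hvt)) as [Hdu Hdv].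
  rewrite Fa_eq_fa, Fs_eq_fs by lra. split; assumption.
Qed.

Theorem lemma5p1
  (ga gs sB q eps Tm Tp bm bp T1 T2 T3 : R)
  (hga : 0 < ga) (hgs : 0 < gs) (hsB : 0 < sB) (hq : 0 < q)
  (heps : 0 < eps < 2)
  (hT : 0 < Tm < Tp) (hb : 0 < bm < bp)
  (hT1 : 0 < T1 < Tm) (hT2 : Tm < T2 < Tp) (hT3 : Tp < T3)
  (hsol : forall T, 0 < T ->
     (sB * (1 - eps / 2) * T ^ 4 = q * coalbedo Tm Tp bm bp T <->
      (T = T1 \/ T = T2 \/ T = T3)))
  (huniq : exists T0, 0 < T0 /\ sB * T0 ^ 4 = q * coalbedo Tm Tp bm bp T0 /\
     forall T, 0 < T -> sB * T ^ 4 = q * coalbedo Tm Tp bm bp T -> T = T0)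
  (a0 s0 : R)
  (hQ : inQ a0 s0)
  (hC : in_boundary (inQ4 eps sB q Tm Tp bm bp) a0 s0)
  (hneq : ~ (Fa eps sB a0 s0 = 0 /\ Fs eps sB q Tm Tp bm bp a0 s0 = 0)) :
  exists (tau : R) (Ta Ts : R -> R),
    0 < tau /\
    Ta 0 = a0 /\ Ts 0 = s0 /\
    (forall t, - tau <= t <= 0 ->
       derivable_pt_lim Ta t (Fa eps sB (Ta t) (Ts t) / ga) /\
       derivable_pt_lim Ts t (Fs eps sB q Tm Tp bm bp (Ta t) (Ts t) / gs)) /\
    Ts (- tau) = 0 /\ 0 < Ta (- tau).
Proof.
  destruct hQ as [ha hs].
  destruct (reversed_flow_reaches_axis eps sB q Tm Tp bm bp ga gs a0 s0 hga hgs hsB hq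
              ltac:(lra) ltac:(lra) hb ha hs
              (boundary_Q4_Fs_nonneg eps sB q Tm Tp bm bp a0 s0
                 ltac:(lra) ltac:(lra) ltac:(lra) ltac:(lra) ltac:(lra) ha hs hC)
              (boundary_Q4_Fa_nonpos eps sB q Tm Tp bm bp a0 s0
                 ltac:(apply Rmult_le_pos; lra) ha hs hC)
              hneq)
    as [tau [u [v [Htau [Hu0 [Hv0 [Hvtau [Hutau Hflow]]]]]]]].
  exists tau, (fun t => u (- t)), (fun t => v (- t)).
  rewrite Ropp_0, Ropp_involutive.
  do 3 (split; [assumption |]). split; [| split; assumption].
  intros t Ht. destruct (Hflow (- t) ltac:(lra)) as [Hdu Hdv].
  split.
  - replace (Fa eps sB (u (- t)) (v (- t)) / ga)
      with (- (- Fa eps sB (u (- t)) (v (- t)) / ga)) by (field; lra).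
    apply derivable_pt_lim_comp_opp, Hdu.
  - replace (Fs eps sB q Tm Tp bm bp (u (- t)) (v (- t)) / gs)
      with (- (- Fs eps sB q Tm Tp bm bp (u (- t)) (v (- t)) / gs)) by (field; lra).
    apply derivable_pt_lim_comp_opp, Hdv.
Qed.
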